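(* Let $f(z)=z\big(1+\sum_{n\ge1}c_nz^n\big)$ be holomorphic and univalent in the unit disc and let $\Lambda_p$ ($p\ge0$) be as defined in the context. Define polynomials $F_n(w)$ ($n\ge0$) by $$\frac{zf'(z)}{f(z)-wf(z)^2}=1+\sum_{n\ge1}F_n(w)z^n,\qquad F_0(w)=1,$$ (these are the Faber polynomials of $h(z)=1/f(1/z)$), define $T_n(w)$ by $$\frac{zf'(z)^2}{f(z)-wf(z)^2}=1+\sum_{n\ge1}T_n(w)z^n,\qquad T_0(w)=1,$$ and define constants $a_p^p$ by $$\frac{z^2f'(z)^2}{f(z)^2}=1+\sum_{p\ge1}a_p^pz^p.$$ Then: (1) for every $p\ge1$, $T_{p-1}(w)=F_{p-1}(w)+2c_1F_{p-2}(w)+3c_2F_{p-3}(w)+\cdots+(p-1)c_{p-2}F_1(w)+pc_{p-1}$; (2) for every $p\ge1$ and $u\neq0$, $\Lambda_p(u)+a_p^p\,u=-T_{p-1}(1/u)$; (3) for every fixed $u\neq0$, in a neighborhood of $\xi=0$, $$\frac{\xi^2f'(\xi)^2}{f(\xi)^2}\,\frac{u^2}{f(\xi)-u}=\sum_{p\ge0}\Lambda_p(u)\,\xi^p.$$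
   Context: For $p\ge0$, $\Lambda_p$ denotes the unique function of the form $\Lambda_p(u)=-u^{1-p}+\sum_{j=0}^{p-1}\alpha_ju^{1-j}$ (constants $\alpha_j$ depending on $f$) such that the Laurent expansion at $z=0$ of $z^{1-p}f'(z)+\Lambda_p(f(z))$ contains only powers $z^n$ with $n\ge2$. In particular $\Lambda_0(u)=-u$. *)

From Stdlib Require Import Reals ZArith.
Open Scope R_scope.

Record Cplx := mkC { Re : R; Im : R }.
Definition C0 : Cplx := mkC 0 0.
Definition C1 : Cplx := mkC 1 0.
Definition RtoC (x : R) : Cplx := mkC x 0.
Definition Cadd (a b : Cplx) : Cplx := mkC (Re a + Re b) (Im a + Im b).
Definition Copp (a : Cplx) : Cplx := mkC (- Re a) (- Im a).
Definition Csub (a b : Cplx) : Cplx := Cadd a (Copp b).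
Definition Cmul (a b : Cplx) : Cplx :=
  mkC (Re a * Re b - Im a * Im b) (Re a * Im b + Im a * Re b).
Definition Cinv (a : Cplx) : Cplx :=
  let d := Re a * Re a + Im a * Im a in mkC (Re a / d) (- Im a / d).
Definition Cdiv (a b : Cplx) : Cplx := Cmul a (Cinv b).
Definition Cnorm (a : Cplx) : R := sqrt (Re a * Re a + Im a * Im a).
Fixpoint Cpow (z : Cplx) (n : nat) : Cplx :=
  match n with O => C1 | S m => Cmul z (Cpow z m) end.
Definition Czpow (z : Cplx) (k : Z) : Cplx :=
  match k with
  | Z0 => C1
  | Zpos q => Cpow z (Pos.to_nat q)
  | Zneg q => Cinv (Cpow z (Pos.to_nat q))
  end.
Fixpoint Csum (a : nat -> Cplx) (n : nat) : Cplx :=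
  match n with O => C0 | S m => Cadd (Csum a m) (a m) end.

Definition Cseries_to (a : nat -> Cplx) (s : Cplx) : Prop :=
  forall eps, 0 < eps -> exists N : nat, forall n, (N <= n)%nat ->
    Cnorm (Csub (Csum a n) s) < eps.

Definition Cderiv_at (f : Cplx -> Cplx) (z l : Cplx) : Prop :=
  forall eps, 0 < eps -> exists delta, 0 < delta /\
    forall h, 0 < Cnorm h < delta ->
      Cnorm (Csub (Cdiv (Csub (f (Cadd z h)) (f z)) h) l) < eps.

Definition FPS := nat -> Cplx.
Definition fone : FPS := fun n => match n with O => C1 | _ => C0 end.
Definition fX : FPS := fun n => match n with 1%nat => C1 | _ => C0 end.
Definition fadd (a b : FPS) : FPS := fun n => Cadd (a n) (b n).
Definition fsub (a b : FPS) : FPS := fun n => Csub (a n) (b n).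
Definition fscale (w : Cplx) (a : FPS) : FPS := fun n => Cmul w (a n).
Definition fmul (a b : FPS) : FPS :=
  fun n => Csum (fun k => Cmul (a k) (b (n - k)%nat)) (S n).
Fixpoint fpow (a : FPS) (k : nat) : FPS :=
  match k with O => fone | S m => fmul a (fpow a m) end.
(* inverse of a series with constant term 1:  1/a = sum_k (1-a)^k *)
Definition finv (a : FPS) : FPS :=
  fun n => Csum (fun k => fpow (fsub fone a) k n) (S n).
Definition fderiv (a : FPS) : FPS :=
  fun n => Cmul (RtoC (INR (S n))) (a (S n)).

(* g = 1 + sum_{n>=1} c_n z^n  (c 0 is ignored) *)
Definition gser (c : nat -> Cplx) : FPS :=
  fun n => match n with O => C1 | _ => c n end.
(* f = z g *)
Definition fser (c : nat -> Cplx) : FPS :=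
  fun n => match n with O => C0 | S m => gser c m end.
Definition fpser (c : nat -> Cplx) : FPS := fderiv (fser c).

(* (f - w f^2)/z = g (1 - w z g) *)
Definition denom (c : nat -> Cplx) (w : Cplx) : FPS :=
  fmul (gser c) (fsub fone (fscale w (fmul fX (gser c)))).

(* z f'/(f - w f^2) = f' / (g (1 - w z g)) = 1 + sum F_n(w) z^n *)
Definition Fpoly (c : nat -> Cplx) (n : nat) (w : Cplx) : Cplx :=
  fmul (fpser c) (finv (denom c w)) n.
(* z f'^2/(f - w f^2) = f'^2 / (g (1 - w z g)) = 1 + sum T_n(w) z^n *)
Definition Tpoly (c : nat -> Cplx) (n : nat) (w : Cplx) : Cplx :=
  fmul (fmul (fpser c) (fpser c)) (finv (denom c w)) n.
(* z^2 f'^2 / f^2 = f'^2 / g^2 = 1 + sum a_p^p z^p *)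
Definition acoef (c : nat -> Cplx) (p : nat) : Cplx :=
  fmul (fmul (fpser c) (fpser c)) (finv (fmul (gser c) (gser c))) p.

Definition gpowZ (c : nat -> Cplx) (k : Z) : FPS :=
  match k with
  | Z0 => fone
  | Zpos q => fpow (gser c) (Pos.to_nat q)
  | Zneg q => fpow (finv (gser c)) (Pos.to_nat q)
  end.
(* coefficient of z^n in the Laurent series z^m * s *)
Definition lc (m : Z) (s : FPS) (n : Z) : Cplx :=
  if (0 <=? n - m)%Z then s (Z.to_nat (n - m)) else C0.

(* al j (j < p) are the constants alpha_j of Lambda_p, i.e. the Laurent
   expansion of  z^{1-p} f'(z) - f(z)^{1-p} + sum_{j<p} alpha_j f(z)^{1-j}
   (with f^k = z^k g^k) has no term z^n with n <= 1. *)
Definition lam_spec (c : nat -> Cplx) (p : nat) (al : nat -> Cplx) : Prop :=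
  forall n : Z, (n <= 1)%Z ->
    Cadd (Csub (lc (1 - Z.of_nat p) (fpser c) n)
               (lc (1 - Z.of_nat p) (gpowZ c (1 - Z.of_nat p)) n))
         (Csum (fun j => Cmul (al j)
                  (lc (1 - Z.of_nat j) (gpowZ c (1 - Z.of_nat j)) n)) p)
    = C0.

Definition Lambda (p : nat) (al : nat -> Cplx) (u : Cplx) : Cplx :=
  Cadd (Copp (Czpow u (1 - Z.of_nat p)))
       (Csum (fun j => Cmul (al j) (Czpow u (1 - Z.of_nat j))) p).

(** Write f(z) = z g(z) with g = 1 + sum c_n z^n.  All three statements are
   consequences of two coefficient identities between formal power series.

   - Residue lemma: for k >= 1 the coefficient of z^k in f' g^{-(k+1)} is 0,
     i.e. f'/f^{k+1} has no residue, being the derivative of -f^{-k}/k.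
     Applied to the defining property of Lambda_p it pins down the constants
     alpha_j = -[z^{p-j}] f'^2 g^{j-2}, hence (geometric series in w = 1/u)
       Lambda_p(u) = -u [z^p] (A K_w),  A = f'^2/g^2,  K_w = 1/(1 - w f).
   - Since A K_w = A + w z f'^2/(g (1 - w z g)), comparing coefficients gives
     (2), and (1) is the Cauchy product of f'^2 = f' * f' with the series of F_n.

   For (3) the formal identity Lambda_p(u) = -u [z^p] (A K_w) is summed: f and
   its derivative are given by their power series near 0 (the derivative by a
   direct difference-quotient estimate), coefficients of products and
   inverses of series with geometrically bounded coefficients are again
   geometrically bounded, and Cauchy products of such series converge to the
   product of the sums. *)

From Stdlib Require Import Reals ZArith Lra Lia Psatz FunctionalExtensionality.
(* Imported last so that its [C1] shadows the one of [Reals]. *)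
Open Scope R_scope.

Lemma Cplx_eq (a b : Cplx) : Re a = Re b -> Im a = Im b -> a = b.
Proof. destruct a, b; simpl; intros -> ->; reflexivity. Qed.

Lemma Cplx_ring : ring_theory C0 C1 Cadd Cmul Csub Copp (@eq Cplx).
Proof.
  constructor; intros; apply Cplx_eq; destruct x; try destruct y; try destruct z;
  simpl; ring.
Qed.
Add Ring Cplx_ring : Cplx_ring.

Lemma C1_neq_C0 : C1 <> C0.
Proof. intro H. injection H. lra. Qed.

Lemma Cinv_l (a : Cplx) : a <> C0 -> Cmul (Cinv a) a = C1.
Proof.
  destruct a as [x y]; intro H.
  assert (x * x + y * y <> 0).
  { intro E. apply H. assert (x = 0) by nra. assert (y = 0) by nra. subst; reflexivity. }
  apply Cplx_eq; simpl; field; auto.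
Qed.

Lemma Cplx_field : field_theory C0 C1 Cadd Cmul Csub Copp Cdiv Cinv (@eq Cplx).
Proof. constructor; [exact Cplx_ring | exact C1_neq_C0 | reflexivity | exact Cinv_l]. Qed.
Add Field Cplx_field : Cplx_field.

Lemma Csub_eq0 (x y : Cplx) : Csub x y = C0 -> x = y.
Proof. intro H. transitivity (Cadd (Csub x y) y); [ring | rewrite H; ring]. Qed.

Lemma Cmul_eq1_inv (a b : Cplx) : Cmul a b = C1 -> a <> C0 /\ b = Cinv a.
Proof.
  intro H. assert (Ha : a <> C0).
  { intro E. apply C1_neq_C0. rewrite <- H, E. ring. }
  split; auto. transitivity (Cmul (Cinv a) (Cmul a b)); [field; auto | rewrite H; ring].
Qed.

Lemma Cpow_add (z : Cplx) (m n : nat) : Cpow z (m + n) = Cmul (Cpow z m) (Cpow z n).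
Proof. induction m; simpl; [ring | rewrite IHm; ring]. Qed.

Lemma Cpow_nz (u : Cplx) (n : nat) : u <> C0 -> Cpow u n <> C0.
Proof.
  intro Hu; induction n; simpl; [apply C1_neq_C0 |]. intro E.
  apply IHn. transitivity (Cmul (Cinv u) (Cmul u (Cpow u n))); [field; auto | rewrite E; ring].
Qed.

Lemma Cpow_Cinv (u : Cplx) (n : nat) : u <> C0 -> Cpow (Cinv u) n = Cinv (Cpow u n).
Proof.
  intro Hu; induction n; simpl.
  - apply Cplx_eq; simpl; field.
  - rewrite IHn. pose proof (Cpow_nz u n Hu). field. split; auto.
Qed.

(* u * (1/u)^k = u^{1-k}: the monomials of Lambda_p as powers of w = 1/u. *)
Lemma Czpow_one_minus (u : Cplx) (k : nat) :
  u <> C0 -> Cmul u (Cpow (Cinv u) k) = Czpow u (1 - Z.of_nat k).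
Proof.
  intro Hu. destruct k as [|[|k]].
  - simpl. ring.
  - simpl. field. auto.
  - replace (1 - Z.of_nat (S (S k)))%Z with (Z.neg (Pos.of_succ_nat k)) by lia.
    simpl Czpow. rewrite SuccNat2Pos.id_succ, Cpow_Cinv by auto.
    pose proof (Cpow_nz u k Hu). simpl. field. auto.
Qed.

Lemma RtoC_add (x y : R) : RtoC (x + y) = Cadd (RtoC x) (RtoC y).
Proof. apply Cplx_eq; simpl; ring. Qed.

Lemma Csum_ext (a b : nat -> Cplx) (n : nat) :
  (forall k, (k < n)%nat -> a k = b k) -> Csum a n = Csum b n.
Proof.
  intro H; induction n; simpl; auto.
  rewrite IHn, H by (intros; try apply H; lia). reflexivity.
Qed.

Lemma Csum_add (a b : nat -> Cplx) (n : nat) :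
  Csum (fun k => Cadd (a k) (b k)) n = Cadd (Csum a n) (Csum b n).
Proof. induction n; simpl; [ring | rewrite IHn; ring]. Qed.

Lemma Csum_sub (a b : nat -> Cplx) (n : nat) :
  Csum (fun k => Csub (a k) (b k)) n = Csub (Csum a n) (Csum b n).
Proof. induction n; simpl; [ring | rewrite IHn; ring]. Qed.

Lemma Csum_opp (a : nat -> Cplx) (n : nat) :
  Csum (fun k => Copp (a k)) n = Copp (Csum a n).
Proof. induction n; simpl; [ring | rewrite IHn; ring]. Qed.

Lemma Csum_mul_l (c : Cplx) (a : nat -> Cplx) (n : nat) :
  Csum (fun k => Cmul c (a k)) n = Cmul c (Csum a n).
Proof. induction n; simpl; [ring | rewrite IHn; ring]. Qed.

Lemma Csum_mul_r (c : Cplx) (a : nat -> Cplx) (n : nat) :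
  Csum (fun k => Cmul (a k) c) n = Cmul (Csum a n) c.
Proof. induction n; simpl; [ring | rewrite IHn; ring]. Qed.

Lemma Csum_zero (a : nat -> Cplx) (n : nat) :
  (forall k, (k < n)%nat -> a k = C0) -> Csum a n = C0.
Proof.
  intro H; induction n; simpl; auto.
  rewrite IHn, H by (intros; try apply H; lia). ring.
Qed.

Lemma Csum_first (a : nat -> Cplx) (n : nat) :
  Csum a (S n) = Cadd (a O) (Csum (fun k => a (S k)) n).
Proof.
  induction n; [simpl; ring |].
  change (Csum a (S (S n))) with (Cadd (Csum a (S n)) (a (S n))).
  rewrite IHn. simpl. ring.
Qed.

Lemma Csum_plus (a : nat -> Cplx) (m n : nat) :
  Csum a (m + n) = Cadd (Csum a m) (Csum (fun k => a (m + k)%nat) n).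
Proof.
  induction n; [simpl; rewrite Nat.add_0_r; ring |].
  rewrite Nat.add_succ_r. simpl. rewrite IHn. ring.
Qed.

Lemma Csum_rev (n : nat) (a : nat -> Cplx) :
  Csum a n = Csum (fun k => a (n - 1 - k)%nat) n.
Proof.
  revert a; induction n; intro a; [reflexivity |].
  rewrite Csum_first, (IHn (fun k => a (S k))).
  change (Csum (fun k => a (S n - 1 - k)%nat) (S n)) with
    (Cadd (Csum (fun k => a (S n - 1 - k)%nat) n) (a (S n - 1 - n)%nat)).
  replace (S n - 1 - n)%nat with O by lia.
  rewrite (Radd_comm Cplx_ring). f_equal. apply Csum_ext. intros k Hk. f_equal. lia.
Qed.

Lemma Csum_swap (a : nat -> nat -> Cplx) (n m : nat) :
  Csum (fun i => Csum (fun j => a i j) m) n = Csum (fun j => Csum (fun i => a i j) n) m.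
Proof.
  induction n; simpl.
  - symmetry; apply Csum_zero; reflexivity.
  - rewrite IHn, <- Csum_add. reflexivity.
Qed.

Lemma Csum_single (a : nat -> Cplx) (n i : nat) : (i < n)%nat ->
  (forall k, (k < n)%nat -> k <> i -> a k = C0) -> Csum a n = a i.
Proof.
  intros Hi H. induction n; [lia |]. simpl. destruct (Nat.eq_dec i n).
  - subst. rewrite Csum_zero by (intros; apply H; lia). ring.
  - rewrite IHn, (H n) by (try lia; intros; apply H; lia). ring.
Qed.

(* Reindexing a triangular double sum, the combinatorial core of associativity. *)
Lemma Csum_triangle (F : nat -> nat -> Cplx) (n : nat) :
  Csum (fun i => Csum (fun k => F k i) (S i)) (S n) =
  Csum (fun k => Csum (fun j => F k (k + j)%nat) (S (n - k))) (S n).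
Proof.
  induction n; [reflexivity |].
  change (Csum (fun i => Csum (fun k => F k i) (S i)) (S (S n))) with
    (Cadd (Csum (fun i => Csum (fun k => F k i) (S i)) (S n))
          (Csum (fun k => F k (S n)) (S (S n)))).
  rewrite IHn.
  change (Csum (fun k => Csum (fun j => F k (k + j)%nat) (S (S n - k))) (S (S n))) with
    (Cadd (Csum (fun k => Csum (fun j => F k (k + j)%nat) (S (S n - k))) (S n))
          (Csum (fun j => F (S n) (S n + j)%nat) (S (S n - S n)))).
  rewrite (Csum_ext (fun k => Csum (fun j => F k (k + j)%nat) (S (S n - k)))
             (fun k => Cadd (Csum (fun j => F k (k + j)%nat) (S (n - k))) (F k (S n)))).
  2:{ intros k Hk. replace (S n - k)%nat with (S (n - k)) by lia.
      change (Csum (fun j => F k (k + j)%nat) (S (S (n - k)))) with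
        (Cadd (Csum (fun j => F k (k + j)%nat) (S (n - k))) (F k (k + S (n - k))%nat)).
      replace (k + S (n - k))%nat with (S n) by lia. reflexivity. }
  rewrite Csum_add, Nat.sub_diag. simpl Csum. rewrite Nat.add_0_r. ring.
Qed.

(** ** The ring of formal power series *)

Ltac fext := apply functional_extensionality; intro.

Definition fzero : FPS := fun _ => C0.
Definition fopp (a : FPS) : FPS := fun n => Copp (a n).
Definition fC (w : Cplx) : FPS := fun n => match n with O => w | _ => C0 end.

Lemma fmul_comm (a b : FPS) : fmul a b = fmul b a.
Proof.
  fext; unfold fmul. rewrite Csum_rev. apply Csum_ext. intros k Hk.
  replace (S x - 1 - k)%nat with (x - k)%nat by lia.
  replace (x - (x - k))%nat with k by lia. ring.
Qed.

Lemma fmul_assoc (a b c : FPS) : fmul (fmul a b) c = fmul a (fmul b c).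
Proof.
  fext; unfold fmul.
  transitivity (Csum (fun i => Csum (fun k =>
      Cmul (Cmul (a k) (b (i - k)%nat)) (c (x - i)%nat)) (S i)) (S x)).
  { apply Csum_ext; intros i Hi. rewrite <- Csum_mul_r. reflexivity. }
  rewrite (Csum_triangle (fun k i => Cmul (Cmul (a k) (b (i - k)%nat)) (c (x - i)%nat))).
  apply Csum_ext; intros k Hk. rewrite <- Csum_mul_l. apply Csum_ext; intros j Hj.
  replace (k + j - k)%nat with j by lia.
  replace (x - (k + j))%nat with (x - k - j)%nat by lia. ring.
Qed.

Lemma fmul_fone_l (a : FPS) : fmul fone a = a.
Proof.
  fext; unfold fmul.
  rewrite (Csum_single _ _ O) by (first [lia | intros [|k] _ Hk; [lia | simpl; ring]]).
  simpl. rewrite Nat.sub_0_r. ring.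
Qed.

Lemma fmul_fone_r (a : FPS) : fmul a fone = a.
Proof. rewrite fmul_comm; apply fmul_fone_l. Qed.

Lemma fmul_fadd_l (a b c : FPS) : fmul (fadd a b) c = fadd (fmul a c) (fmul b c).
Proof. fext; unfold fmul, fadd. rewrite <- Csum_add. apply Csum_ext; intros; ring. Qed.

Lemma fmul_fadd_r (a b c : FPS) : fmul c (fadd a b) = fadd (fmul c a) (fmul c b).
Proof. rewrite !(fmul_comm c); apply fmul_fadd_l. Qed.

Lemma fmul_fsub_l (a b c : FPS) : fmul (fsub a b) c = fsub (fmul a c) (fmul b c).
Proof. fext; unfold fmul, fsub. rewrite <- Csum_sub. apply Csum_ext; intros; ring. Qed.

Lemma fmul_fscale_l (w : Cplx) (a b : FPS) : fmul (fscale w a) b = fscale w (fmul a b).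
Proof. fext; unfold fmul, fscale. rewrite <- Csum_mul_l. apply Csum_ext; intros; ring. Qed.

Lemma fmul_fscale_r (w : Cplx) (a b : FPS) : fmul b (fscale w a) = fscale w (fmul b a).
Proof. rewrite !(fmul_comm b); apply fmul_fscale_l. Qed.

Lemma FPS_ring : ring_theory fzero fone fadd fmul fsub fopp (@eq FPS).
Proof.
  constructor; intros.
  - fext; unfold fadd, fzero; ring.
  - fext; unfold fadd; ring.
  - fext; unfold fadd; ring.
  - apply fmul_fone_l.
  - apply fmul_comm.
  - symmetry; apply fmul_assoc.
  - apply fmul_fadd_l.
  - reflexivity.
  - fext; unfold fadd, fopp, fzero; ring.
Qed.
Add Ring FPS_ring : FPS_ring.

Lemma fmul_0 (a b : FPS) : fmul a b O = Cmul (a O) (b O).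
Proof. unfold fmul; simpl; ring. Qed.

Lemma fmul_low (a a' b b' : FPS) (n : nat) :
  (forall m, (m <= n)%nat -> a m = a' m) -> (forall m, (m <= n)%nat -> b m = b' m) ->
  fmul a b n = fmul a' b' n.
Proof. intros Ha Hb; unfold fmul. apply Csum_ext; intros k Hk. rewrite Ha, Hb by lia. reflexivity. Qed.

Lemma fmul_low_zero (a b : FPS) (N : nat) :
  (forall m, (m <= N)%nat -> a m = C0) -> fmul a b N = C0.
Proof. intro H; unfold fmul; apply Csum_zero; intros k Hk; rewrite H by lia; ring. Qed.

Lemma fscale_fC (w : Cplx) (a : FPS) : fscale w a = fmul (fC w) a.
Proof.
  fext; unfold fmul, fscale, fC. rewrite Csum_first, Csum_zero by (intros; ring).
  rewrite Nat.sub_0_r; ring.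
Qed.

Lemma fmul_fC_coef (w : Cplx) (a : FPS) (n : nat) : fmul (fC w) a n = Cmul w (a n).
Proof. rewrite <- fscale_fC. reflexivity. Qed.

Lemma fC_add (x y : Cplx) : fC (Cadd x y) = fadd (fC x) (fC y).
Proof. fext; unfold fadd, fC; destruct x0; ring. Qed.

Lemma fC_1 : fC C1 = fone.
Proof. fext; unfold fC, fone; destruct x; ring. Qed.

Definition fsumS (F : nat -> FPS) (n : nat) : FPS := fun m => Csum (fun j => F j m) n.

Lemma fmul_fsumS_l (F : nat -> FPS) (n : nat) (b : FPS) :
  fmul (fsumS F n) b = fsumS (fun j => fmul (F j) b) n.
Proof.
  fext; unfold fmul, fsumS. rewrite <- Csum_swap.
  apply Csum_ext; intros. rewrite Csum_mul_r. reflexivity.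
Qed.

(** Multiplication by z^k. *)

Definition sh (k : nat) (s : FPS) : FPS :=
  fun n => if (k <=? n)%nat then s (n - k)%nat else C0.

Lemma sh_coef_ge (k : nat) (s : FPS) (n : nat) : (k <= n)%nat -> sh k s n = s (n - k)%nat.
Proof. intro H; unfold sh; destruct (Nat.leb_spec k n); [reflexivity | lia]. Qed.

Lemma sh_coef_lt (k : nat) (s : FPS) (n : nat) : (n < k)%nat -> sh k s n = C0.
Proof. intro H; unfold sh; destruct (Nat.leb_spec k n); [lia | reflexivity]. Qed.

Lemma sh_0 (s : FPS) : sh 0 s = s.
Proof. fext; unfold sh; simpl; f_equal; lia. Qed.

Lemma sh_add (i j : nat) (s : FPS) : sh i (sh j s) = sh (i + j) s.
Proof.
  fext; unfold sh.
  destruct (Nat.leb_spec i x); destruct (Nat.leb_spec (i + j) x);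
  try destruct (Nat.leb_spec j (x - i)); try lia; try reflexivity.
  f_equal; lia.
Qed.

Lemma fmul_sh (k : nat) (a b : FPS) : fmul (sh k a) b = sh k (fmul a b).
Proof.
  fext; unfold fmul, sh. destruct (Nat.leb_spec k x).
  - replace (S x) with (k + S (x - k))%nat by lia. rewrite Csum_plus.
    rewrite Csum_zero by (intros i Hi; destruct (Nat.leb_spec k i); [lia | ring]).
    rewrite (Radd_0_l Cplx_ring). apply Csum_ext; intros i Hi.
    destruct (Nat.leb_spec k (k + i)); [| lia].
    replace (k + i - k)%nat with i by lia.
    replace (x - (k + i))%nat with (x - k - i)%nat by lia. reflexivity.
  - apply Csum_zero. intros i Hi. destruct (Nat.leb_spec k i); [lia | ring].
Qed.

Lemma fmul_fX (s : FPS) : fmul fX s = sh 1 s.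
Proof.
  fext; unfold fmul, sh, fX. destruct x; [simpl; ring |].
  rewrite (Csum_single _ _ 1)
    by (first [lia | intros [|[|k]] _ Hk; simpl; try lia; ring]).
  simpl. rewrite Nat.sub_0_r. ring.
Qed.

Lemma fpow_fscale (w : Cplx) (a : FPS) (n : nat) :
  fpow (fscale w a) n = fscale (Cpow w n) (fpow a n).
Proof.
  induction n; simpl.
  - fext; unfold fscale; ring.
  - rewrite IHn, fmul_fscale_l, fmul_fscale_r. fext; unfold fscale; ring.
Qed.

Lemma fpow_sh (k : nat) (a : FPS) (n : nat) : fpow (sh k a) n = sh (k * n) (fpow a n).
Proof.
  induction n; simpl.
  - rewrite Nat.mul_0_r, sh_0. reflexivity.
  - rewrite IHn, fmul_sh, fmul_comm, fmul_sh, sh_add, fmul_comm. f_equal. lia.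
Qed.

Lemma fpow_val (a : FPS) (k n : nat) : a O = C0 -> (n < k)%nat -> fpow a k n = C0.
Proof.
  revert n; induction k; intros n Ha Hn; [lia |].
  simpl. unfold fmul. apply Csum_zero. intros [|i] Hi.
  - rewrite Ha; ring.
  - rewrite IHk by (auto; lia). ring.
Qed.

Lemma fpow_0_coef (a : FPS) (k : nat) : a O = C1 -> fpow a k O = C1.
Proof. intro Ha; induction k; simpl; [reflexivity |]. rewrite fmul_0, Ha, IHk; ring. Qed.

Lemma finv_0 (a : FPS) : finv a O = C1.
Proof. unfold finv; simpl; ring. Qed.

Definition fgeom (b : FPS) (N : nat) : FPS := fun n => Csum (fun k => fpow b k n) N.

Lemma fgeom_telescope (b : FPS) (N : nat) :
  fmul (fsub fone b) (fgeom b N) = fsub fone (fpow b N).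
Proof.
  induction N.
  - fext; unfold fmul, fgeom, fsub; simpl.
    rewrite Csum_zero by (intros; ring). destruct x; ring.
  - assert (fgeom b (S N) = fadd (fgeom b N) (fpow b N)) as -> by (fext; reflexivity).
    rewrite fmul_fadd_r, IHN, fmul_fsub_l, fmul_fone_l.
    fext; unfold fadd, fsub; simpl. ring.
Qed.

Lemma finv_spec (a : FPS) : a O = C1 -> fmul a (finv a) = fone.
Proof.
  intro Ha. fext. set (b := fsub fone a).
  assert (Hb0 : b O = C0) by (unfold b, fsub; rewrite Ha; simpl; ring).
  assert (Ea : a = fsub fone b) by (fext; unfold b, fsub; ring).
  transitivity (fmul (fsub fone b) (fgeom b (S x)) x).
  - rewrite <- Ea. apply fmul_low; auto. intros m Hm. unfold finv, fgeom. fold b.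
    replace (S x) with (S m + (x - m))%nat by lia. rewrite Csum_plus.
    rewrite (Csum_zero (fun k => fpow b (S m + k) m)) by (intros; apply fpow_val; auto; lia).
    ring.
  - rewrite fgeom_telescope. unfold fsub. rewrite fpow_val by (auto; lia). ring.
Qed.

Lemma finv_unique (a b : FPS) : a O = C1 -> fmul a b = fone -> b = finv a.
Proof.
  intros Ha H.
  rewrite <- (fmul_fone_r b), <- (finv_spec a Ha), <- fmul_assoc, (fmul_comm b), H,
    fmul_fone_l.
  reflexivity.
Qed.

Lemma finv_mul (a b : FPS) : a O = C1 -> b O = C1 ->
  finv (fmul a b) = fmul (finv a) (finv b).
Proof.
  intros Ha Hb. symmetry. apply finv_unique; [rewrite fmul_0, Ha, Hb; ring |].
  transitivity (fmul (fmul a (finv a)) (fmul b (finv b))); [ring |].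
  rewrite !finv_spec by auto. ring.
Qed.

(** ** Formal identities attached to f = z g *)

Section FormalSeries.
Variable c : nat -> Cplx.
Local Notation g := (gser c).
Local Notation q := (finv (gser c)).
Local Notation fp := (fpser c).

Lemma g_q : fmul g q = fone.
Proof. apply finv_spec; reflexivity. Qed.

Lemma fser_sh : fser c = sh 1 g.
Proof. fext; unfold fser, sh; destruct x; simpl; auto. rewrite Nat.sub_0_r; reflexivity. Qed.

Lemma gpowZ_succ (k : Z) : gpowZ c (k + 1) = fmul g (gpowZ c k).
Proof.
  destruct k as [|p|p].
  - reflexivity.
  - replace (Z.pos p + 1)%Z with (Z.pos (Pos.succ p)) by lia. simpl.
    rewrite Pos2Nat.inj_succ. reflexivity.
  - destruct (Pos.succ_pred_or p) as [->|E].
    + simpl. rewrite fmul_fone_r. symmetry; apply g_q.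
    + rewrite <- E.
      replace (Z.neg (Pos.succ (Pos.pred p)) + 1)%Z with (Z.neg (Pos.pred p)) by lia.
      simpl. rewrite Pos2Nat.inj_succ. simpl.
      rewrite <- fmul_assoc, g_q, fmul_fone_l. reflexivity.
Qed.

Lemma gpowZ_pred (k : Z) : gpowZ c (k - 1) = fmul q (gpowZ c k).
Proof.
  replace k with ((k - 1) + 1)%Z at 2 by lia. rewrite gpowZ_succ.
  rewrite <- fmul_assoc, (fmul_comm q), g_q, fmul_fone_l. reflexivity.
Qed.

Lemma gpowZ_add (a b : Z) : gpowZ c (a + b) = fmul (gpowZ c a) (gpowZ c b).
Proof.
  induction b using Z.peano_ind.
  - rewrite Z.add_0_r. simpl. rewrite fmul_fone_r; reflexivity.
  - rewrite <- Z.add_1_r, Z.add_assoc, !gpowZ_succ, IHb. ring.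
  - rewrite <- Z.sub_1_r, Z.add_sub_assoc, !gpowZ_pred, IHb. ring.
Qed.

Lemma gpowZ_nat (n : nat) : gpowZ c (Z.of_nat n) = fpow g n.
Proof. destruct n; [reflexivity |]. simpl. rewrite SuccNat2Pos.id_succ. reflexivity. Qed.

Lemma gpowZ_negnat (n : nat) : gpowZ c (- Z.of_nat n) = fpow q n.
Proof. destruct n; [reflexivity |]. simpl. rewrite SuccNat2Pos.id_succ. reflexivity. Qed.

Lemma gpowZ_0coef (k : Z) : gpowZ c k O = C1.
Proof. destruct k; simpl; [reflexivity | apply fpow_0_coef; reflexivity | apply fpow_0_coef, finv_0]. Qed.

(** The Euler operator z d/dz is a derivation. *)

Definition fD (a : FPS) : FPS := fun n => Cmul (RtoC (INR n)) (a n).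

Lemma fD_mul (a b : FPS) : fD (fmul a b) = fadd (fmul (fD a) b) (fmul a (fD b)).
Proof.
  fext; unfold fD, fmul, fadd. rewrite <- Csum_add, <- Csum_mul_l.
  apply Csum_ext; intros k Hk.
  replace (RtoC (INR x)) with (Cadd (RtoC (INR k)) (RtoC (INR (x - k))))
    by (rewrite <- RtoC_add, minus_INR by lia; f_equal; ring).
  ring.
Qed.

Lemma fD_fone : fD fone = fzero.
Proof. fext; unfold fD, fone, fzero; destruct x; apply Cplx_eq; simpl; ring. Qed.

Lemma fD_q : fD q = fopp (fmul q (fmul q (fD g))).
Proof.
  assert (H : fadd (fmul (fD g) q) (fmul g (fD q)) = fzero)
    by (rewrite <- fD_mul, g_q; apply fD_fone).
  transitivity (fsub (fmul q (fadd (fmul (fD g) q) (fmul g (fD q))))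
                     (fmul q (fmul q (fD g)))).
  - transitivity (fmul (fmul g q) (fD q)); [rewrite g_q; ring | ring].
  - rewrite H. ring.
Qed.

Lemma fD_qpow (k : nat) :
  fD (fpow q (S k)) = fopp (fmul (fC (RtoC (INR (S k)))) (fmul (fpow q (S (S k))) (fD g))).
Proof.
  induction k.
  - simpl. rewrite !fmul_fone_r, fD_q. change (RtoC 1) with C1. rewrite fC_1. ring.
  - change (fpow q (S (S k))) with (fmul q (fpow q (S k))).
    rewrite fD_mul, IHk, fD_q.
    change (fpow q (S (S (S k)))) with (fmul q (fmul q (fpow q (S k)))).
    rewrite (S_INR (S k)), RtoC_add, fC_add. change (RtoC 1) with C1. rewrite fC_1.
    change (fpow q (S (S k))) with (fmul q (fpow q (S k))). ring.
Qed.

Lemma fpser_eq : fp = fadd g (fD g).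
Proof.
  fext; unfold fpser, fderiv, fadd, fD, fser. rewrite S_INR, RtoC_add.
  change (RtoC 1) with C1. ring.
Qed.

(** Residue lemma: [z^k] f' g^{-(k+1)} vanishes for k >= 1 and is 1 for k = 0.
    Indeed f' g^{-(k+1)} = g^{-k} + z g' g^{-(k+1)} and the coefficient of z^k
    in z (g^{-k})' = -k z g' g^{-(k+1)} is k [z^k] g^{-k}. *)
Lemma residue_vanishes (k : nat) : (1 <= k)%nat -> fmul (fpow q (S k)) fp k = C0.
Proof.
  intro Hk. destruct k as [|k]; [lia |].
  rewrite fpser_eq, fmul_fadd_r.
  assert (E1 : fmul (fpow q (S (S k))) g = fpow q (S k)).
  { change (fpow q (S (S k))) with (fmul q (fpow q (S k))).
    rewrite fmul_comm, <- fmul_assoc, g_q, fmul_fone_l. reflexivity. }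
  assert (E2 : Cmul (RtoC (INR (S k))) (fpow q (S k) (S k)) =
     Copp (Cmul (RtoC (INR (S k))) (fmul (fpow q (S (S k))) (fD g) (S k)))).
  { change (Cmul (RtoC (INR (S k))) (fpow q (S k) (S k))) with (fD (fpow q (S k)) (S k)).
    rewrite fD_qpow. unfold fopp. rewrite fmul_fC_coef. reflexivity. }
  rewrite E1. unfold fadd.
  assert (Hr : RtoC (INR (S k)) <> C0).
  { assert (INR (S k) <> 0) by (apply not_0_INR; lia). intro E; injection E; auto. }
  set (X := fmul (fpow q (S (S k))) (fD g) (S k)) in *.
  set (Y := fpow q (S k) (S k)) in *.
  set (r := RtoC (INR (S k))) in *.
  transitivity (Cmul (Cinv r) (Cadd (Cmul r Y) (Cmul r X))); [field; auto |].
  rewrite E2; ring.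
Qed.

Lemma residue_one : fmul (fpow q 1) fp O = C1.
Proof.
  rewrite fmul_0. simpl. rewrite fmul_fone_r, finv_0.
  unfold fpser, fderiv, fser. apply Cplx_eq; simpl; ring.
Qed.

Lemma lc_sh (s : FPS) (m p j : nat) : (j <= p)%nat ->
  lc (1 - Z.of_nat j) s (Z.of_nat m + 1 - Z.of_nat p) = sh (p - j) s m.
Proof.
  intro Hj. unfold lc, sh.
  destruct (Z.leb_spec 0 (Z.of_nat m + 1 - Z.of_nat p - (1 - Z.of_nat j)));
  destruct (Nat.leb_spec (p - j) m); try lia; try reflexivity.
  f_equal. lia.
Qed.

(* z^{p-1} times the Laurent series z^{1-p} f' - f^{1-p} + sum_j alpha_j f^{1-j} *)
Definition lambda_err (p : nat) (al : nat -> Cplx) : FPS :=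
  fadd (fsub fp (gpowZ c (1 - Z.of_nat p)))
       (fsumS (fun j => fmul (fC (al j)) (sh (p - j)%nat (gpowZ c (1 - Z.of_nat j)))) p).

Lemma lambda_err_low (p : nat) (al : nat -> Cplx) : lam_spec c p al ->
  forall m, (m <= p)%nat -> lambda_err p al m = C0.
Proof.
  intros H m Hm. specialize (H (Z.of_nat m + 1 - Z.of_nat p)%Z ltac:(lia)).
  rewrite !lc_sh, Nat.sub_diag, !sh_0 in H by lia.
  rewrite <- H. unfold lambda_err, fadd, fsub, fsumS. f_equal.
  apply Csum_ext; intros j Hj. rewrite fmul_fC_coef, lc_sh by lia. reflexivity.
Qed.

Definition beta (p j : nat) : Cplx :=
  fmul (fmul fp fp) (gpowZ c (Z.of_nat j - 2)) (p - j)%nat.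

Lemma beta_diag (p : nat) : beta p p = C1.
Proof.
  unfold beta. rewrite Nat.sub_diag, fmul_0, gpowZ_0coef, fmul_0.
  unfold fpser, fderiv, fser; simpl. apply Cplx_eq; simpl; ring.
Qed.

(* Multiplying the vanishing series by g^{j-2} f' and reading off z^{p-j}, the
   residue lemma kills every term except alpha_j and beta p j. *)
Lemma alpha_eq (p : nat) (al : nat -> Cplx) : lam_spec c p al ->
  forall j, (j < p)%nat -> al j = Copp (beta p j).
Proof.
  intros Hs j Hj.
  set (Y := fmul (gpowZ c (Z.of_nat j - 2)) fp).
  assert (HY : forall i, (j <= i)%nat ->
            fmul (gpowZ c (1 - Z.of_nat i)) Y = fmul (fpow q (S (i - j))) fp).
  { intros i Hi. unfold Y. rewrite <- fmul_assoc, <- gpowZ_add.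
    replace (1 - Z.of_nat i + (Z.of_nat j - 2))%Z with (- Z.of_nat (S (i - j)))%Z by lia.
    rewrite gpowZ_negnat. reflexivity. }
  assert (Hoff : forall i, (j < i)%nat -> fmul (gpowZ c (1 - Z.of_nat i)) Y (i - j)%nat = C0)
    by (intros i Hi; rewrite HY by lia; apply residue_vanishes; lia).
  assert (Hdiag : fmul (gpowZ c (1 - Z.of_nat j)) Y O = C1)
    by (rewrite HY, Nat.sub_diag by lia; apply residue_one).
  assert (H0 : fmul (lambda_err p al) Y (p - j)%nat = C0)
    by (apply fmul_low_zero; intros; apply lambda_err_low; auto; lia).
  unfold lambda_err in H0. rewrite fmul_fadd_l, fmul_fsub_l, fmul_fsumS_l in H0.
  unfold fadd, fsub, fsumS in H0. rewrite Hoff in H0 by lia.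
  rewrite (Csum_single _ _ j) in H0; auto.
  2:{ intros i Hi Hij. rewrite fmul_assoc, fmul_sh, fmul_fC_coef.
      destruct (Nat.lt_ge_cases i j).
      - rewrite sh_coef_lt by lia. ring.
      - rewrite sh_coef_ge by lia. replace (p - j - (p - i))%nat with (i - j)%nat by lia.
        rewrite Hoff by lia. ring. }
  rewrite fmul_assoc, fmul_sh, fmul_fC_coef, sh_coef_ge in H0 by lia.
  replace (p - j - (p - j))%nat with O in H0 by lia. rewrite Hdiag in H0.
  unfold beta. replace (fmul (fmul fp fp) (gpowZ c (Z.of_nat j - 2))) with (fmul fp Y)
    by (unfold Y; ring).
  set (X := fmul fp Y (p - j)%nat) in *.
  transitivity (Csub (Cadd (Csub X C0) (Cmul (al j) C1)) X); [ring | rewrite H0; ring].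
Qed.

Definition Aser : FPS := fmul (fmul fp fp) (finv (fmul g g)).
Definition Kser (w : Cplx) : FPS := finv (fsub fone (fscale w (fser c))).

Lemma finv_gg : finv (fmul g g) = gpowZ c (-2).
Proof.
  rewrite finv_mul by reflexivity. change (-2)%Z with (- Z.of_nat 2)%Z.
  rewrite gpowZ_negnat. simpl. rewrite fmul_fone_r. reflexivity.
Qed.

(* K_w = sum_k w^k z^k g^k; up to order p only k <= p contributes *)
Lemma Kser_trunc (w : Cplx) (p n : nat) : (n <= p)%nat ->
  Kser w n = fsumS (fun k => fmul (fC (Cpow w k)) (sh k (gpowZ c (Z.of_nat k)))) (S p) n.
Proof.
  intro Hn. unfold Kser, finv, fsumS.
  replace (fsub fone (fsub fone (fscale w (fser c)))) with (fscale w (fser c))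
    by (fext; unfold fsub, fscale; ring).
  replace (S p) with (S n + (p - n))%nat by lia. rewrite Csum_plus.
  rewrite (Csum_zero _ (p - n)%nat)
    by (intros k _; rewrite fmul_fC_coef, sh_coef_lt by lia; ring).
  rewrite (Radd_comm Cplx_ring), (Radd_0_l Cplx_ring). apply Csum_ext; intros k Hk.
  rewrite fpow_fscale, fscale_fC, fser_sh, fpow_sh, gpowZ_nat, Nat.mul_1_l. reflexivity.
Qed.

Lemma AK_coef (w : Cplx) (p : nat) :
  fmul Aser (Kser w) p = Csum (fun k => Cmul (Cpow w k) (beta p k)) (S p).
Proof.
  rewrite (fmul_low Aser Aser (Kser w) _ p (fun _ _ => eq_refl) (fun m Hm => Kser_trunc w p m Hm)).
  rewrite fmul_comm, fmul_fsumS_l. unfold fsumS. apply Csum_ext; intros k Hk.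
  rewrite fmul_assoc, fmul_fC_coef, fmul_sh, sh_coef_ge by lia. f_equal.
  unfold beta, Aser. rewrite finv_gg, fmul_comm, fmul_assoc, <- gpowZ_add.
  replace (-2 + Z.of_nat k)%Z with (Z.of_nat k - 2)%Z by lia. reflexivity.
Qed.

Lemma Lambda_AK (p : nat) (al : nat -> Cplx) (u : Cplx) : lam_spec c p al -> u <> C0 ->
  Lambda p al u = Copp (Cmul u (fmul Aser (Kser (Cinv u)) p)).
Proof.
  intros Hs Hu. rewrite AK_coef. unfold Lambda.
  rewrite (Csum_ext (fun j => Cmul (al j) (Czpow u (1 - Z.of_nat j)))
             (fun j => Copp (Cmul u (Cmul (Cpow (Cinv u) j) (beta p j))))).
  2:{ intros j Hj. rewrite (alpha_eq p al Hs j Hj), <- Czpow_one_minus by auto. ring. }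
  simpl Csum at 2. rewrite Csum_opp, Csum_mul_l, beta_diag, <- Czpow_one_minus by auto. ring.
Qed.

(** [z^{p+1}] A K_w = [z^{p+1}] A + w T_p(w), from A K_w = A + w z f'^2/(g (1 - w z g)). *)
Lemma AK_T (w : Cplx) (p : nat) :
  fmul Aser (Kser w) (S p) = Cadd (Aser (S p)) (Cmul w (Tpoly c p w)).
Proof.
  set (e := fmul (fC w) (fmul fX g)).
  assert (He0 : fsub fone e O = C1)
    by (unfold fsub, e; rewrite fmul_fC_coef, fmul_fX, sh_coef_lt by lia; simpl; ring).
  assert (HK : Kser w = finv (fsub fone e))
    by (unfold Kser, e; rewrite fmul_fX, <- fser_sh, <- fscale_fC; reflexivity).
  assert (HD : finv (denom c w) = fmul q (Kser w)).
  { rewrite HK. unfold denom. rewrite fscale_fC. apply finv_mul; [reflexivity | exact He0]. }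
  assert (E : fmul Aser (Kser w) =
              fadd Aser (fmul (fC w) (fmul fX (fmul (fmul fp fp) (finv (denom c w)))))).
  { rewrite HD. unfold Aser. rewrite finv_mul by reflexivity.
    transitivity (fmul (fmul (fmul fp fp) (fmul q q))
                   (fadd (fmul (fsub fone e) (Kser w)) (fmul e (Kser w)))); [ring |].
    rewrite HK, finv_spec by exact He0. rewrite <- HK. unfold e.
    transitivity (fadd (fmul (fmul fp fp) (fmul q q))
        (fmul (fC w) (fmul fX (fmul (fmul g q) (fmul (fmul fp fp) (fmul q (Kser w))))))); [ring |].
    rewrite g_q. ring. }
  rewrite E. unfold fadd. rewrite fmul_fC_coef, fmul_fX, sh_coef_ge by lia.
  replace (S p - 1)%nat with p by lia. reflexivity.
Qed.

End FormalSeries.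

(** Statement (1): T_{p-1} = F_{p-1} + 2 c_1 F_{p-2} + ... + p c_{p-1}, since
    z f'^2/(f - w f^2) = f' * (z f'/(f - w f^2)) and f' = sum (k+1) c_k z^k. *)
Lemma Tpoly_convolution (c : nat -> Cplx) (p : nat) (w : Cplx) : (1 <= p)%nat ->
  Tpoly c (p - 1) w =
  Csum (fun k => Cmul (RtoC (INR (S k))) (Cmul (gser c k) (Fpoly c (p - 1 - k) w))) p.
Proof.
  intro Hp. unfold Tpoly, Fpoly. rewrite fmul_assoc. unfold fmul at 1.
  replace (S (p - 1)) with p by lia. apply Csum_ext; intros k Hk.
  unfold fpser, fderiv, fser. ring.
Qed.

Lemma Lambda_plus_acoef (c : nat -> Cplx) (al : nat -> Cplx) (p : nat) (u : Cplx) :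
  lam_spec c p al -> (1 <= p)%nat -> u <> C0 ->
  Cadd (Lambda p al u) (Cmul (acoef c p) u) = Copp (Tpoly c (p - 1) (Cinv u)).
Proof.
  intros Hs Hp Hu. rewrite (Lambda_AK c p al u Hs Hu).
  destruct p as [|p]; [lia |]. rewrite AK_T. replace (S p - 1)%nat with p by lia.
  unfold acoef. fold (Aser c). field. auto.
Qed.

Definition N2 (a : Cplx) : R := Re a * Re a + Im a * Im a.

Lemma N2_ge0 (a : Cplx) : 0 <= N2 a.
Proof. unfold N2; nra. Qed.

Lemma Cnorm_ge0 (a : Cplx) : 0 <= Cnorm a.
Proof. apply sqrt_pos. Qed.

Lemma Cnorm_sq (a : Cplx) : Cnorm a * Cnorm a = N2 a.
Proof. apply sqrt_sqrt, N2_ge0. Qed.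

Lemma Cnorm_le_sq (a : Cplx) (y : R) : 0 <= y -> N2 a <= y * y -> Cnorm a <= y.
Proof. intros Hy H. unfold Cnorm. rewrite <- (sqrt_square y Hy). apply sqrt_le_1_alt, H. Qed.

Lemma sq_le_Cnorm (a : Cplx) (x : R) : 0 <= x -> x * x <= N2 a -> x <= Cnorm a.
Proof. intros Hx H. unfold Cnorm. rewrite <- (sqrt_square x Hx). apply sqrt_le_1_alt, H. Qed.

Lemma Cnorm_mul (a b : Cplx) : Cnorm (Cmul a b) = Cnorm a * Cnorm b.
Proof.
  destruct a as [a1 a2], b as [b1 b2]; unfold Cnorm; simpl.
  rewrite <- sqrt_mult by nra. f_equal; ring.
Qed.

Lemma Re_le (a : Cplx) : Rabs (Re a) <= Cnorm a.
Proof. unfold Cnorm. rewrite <- sqrt_Rsqr_abs. apply sqrt_le_1_alt. unfold Rsqr. nra. Qed.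

Lemma Im_le (a : Cplx) : Rabs (Im a) <= Cnorm a.
Proof. unfold Cnorm. rewrite <- sqrt_Rsqr_abs. apply sqrt_le_1_alt. unfold Rsqr. nra. Qed.

Lemma Cnorm_ReIm (a : Cplx) : Cnorm a <= Rabs (Re a) + Rabs (Im a).
Proof.
  pose proof (Rabs_pos (Re a)); pose proof (Rabs_pos (Im a)).
  apply Cnorm_le_sq; [lra |]. unfold N2.
  assert (Re a * Re a = Rabs (Re a) * Rabs (Re a)) by (rewrite <- Rabs_mult, Rabs_right; nra).
  assert (Im a * Im a = Rabs (Im a) * Rabs (Im a)) by (rewrite <- Rabs_mult, Rabs_right; nra).
  nra.
Qed.

Lemma Cnorm_tri (a b : Cplx) : Cnorm (Cadd a b) <= Cnorm a + Cnorm b.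
Proof.
  pose proof (Cnorm_ge0 a); pose proof (Cnorm_ge0 b).
  apply Cnorm_le_sq; [lra |].
  assert (Hab : Re a * Re b + Im a * Im b <= Cnorm a * Cnorm b).
  { rewrite <- Cnorm_mul. destruct (Rle_or_lt (Re a * Re b + Im a * Im b) 0).
    - pose proof (Cnorm_ge0 (Cmul a b)); lra.
    - apply sq_le_Cnorm; [lra |]. destruct a as [a1 a2], b as [b1 b2]; unfold N2; simpl in *.
      pose proof (Rle_0_sqr (a1 * b2 - a2 * b1)) as Hs; unfold Rsqr in Hs; lra. }
  pose proof (Cnorm_sq a); pose proof (Cnorm_sq b). unfold N2 in *.
  destruct a as [a1 a2], b as [b1 b2]; simpl in *. nra.
Qed.

Lemma Cnorm_opp (a : Cplx) : Cnorm (Copp a) = Cnorm a.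
Proof. destruct a; unfold Cnorm; simpl; f_equal; ring. Qed.

Lemma Cnorm_sub_tri (a b : Cplx) : Cnorm (Csub a b) <= Cnorm a + Cnorm b.
Proof. unfold Csub; rewrite <- (Cnorm_opp b); apply Cnorm_tri. Qed.

Lemma Cnorm_sub_sym (a b : Cplx) : Cnorm (Csub a b) = Cnorm (Csub b a).
Proof. rewrite <- Cnorm_opp; f_equal; ring. Qed.

Lemma Cdist_tri (a b c : Cplx) : Cnorm (Csub a c) <= Cnorm (Csub a b) + Cnorm (Csub b c).
Proof. replace (Csub a c) with (Cadd (Csub a b) (Csub b c)) by ring. apply Cnorm_tri. Qed.

Lemma Cnorm_C0 : Cnorm C0 = 0.
Proof. unfold Cnorm; simpl. replace (0 * 0 + 0 * 0) with 0 by ring. apply sqrt_0. Qed.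

Lemma Cnorm_C1 : Cnorm C1 = 1.
Proof. unfold Cnorm; simpl. replace (1 * 1 + 0 * 0) with 1 by ring. apply sqrt_1. Qed.

Lemma Cnorm_eq0 (a : Cplx) : Cnorm a = 0 -> a = C0.
Proof.
  destruct a as [a1 a2]; intro H. unfold Cnorm in H; simpl in H.
  apply sqrt_eq_0 in H; [| nra]. apply Cplx_eq; simpl; nra.
Qed.

Lemma Cnorm_pos (a : Cplx) : a <> C0 -> 0 < Cnorm a.
Proof. intro H. destruct (Cnorm_ge0 a); auto. exfalso; apply H, Cnorm_eq0; auto. Qed.

Lemma Cnorm_RtoC (x : R) : Cnorm (RtoC x) = Rabs x.
Proof. unfold Cnorm; simpl. rewrite <- sqrt_Rsqr_abs. f_equal. unfold Rsqr; ring. Qed.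

Lemma Cnorm_pow (z : Cplx) (n : nat) : Cnorm (Cpow z n) = Cnorm z ^ n.
Proof. induction n; simpl; [apply Cnorm_C1 | rewrite Cnorm_mul, IHn; ring]. Qed.

Lemma Cnorm_inv (h : Cplx) : h <> C0 -> Cnorm (Cinv h) = / Cnorm h.
Proof.
  intro Hh. pose proof (Cnorm_pos h Hh).
  assert (Cnorm (Cinv h) * Cnorm h = 1) by (rewrite <- Cnorm_mul, Cinv_l, Cnorm_C1; auto).
  apply Rmult_eq_reg_r with (Cnorm h); [| lra]. rewrite H0, Rinv_l; lra.
Qed.

Fixpoint Rsum (f : nat -> R) (n : nat) : R :=
  match n with O => 0 | S m => Rsum f m + f m end.

Lemma Rsum_ext (f g : nat -> R) (n : nat) :
  (forall k, (k < n)%nat -> f k = g k) -> Rsum f n = Rsum g n.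
Proof. intro H; induction n; simpl; auto. rewrite IHn, H by (auto; lia). auto. Qed.

Lemma Rsum_le (f g : nat -> R) (n : nat) :
  (forall k, (k < n)%nat -> f k <= g k) -> Rsum f n <= Rsum g n.
Proof.
  intro H; induction n; simpl; [lra |].
  pose proof (H n ltac:(lia)). assert (Rsum f n <= Rsum g n) by (apply IHn; auto). lra.
Qed.

Lemma Rsum_nonneg (f : nat -> R) (n : nat) : (forall k, (k < n)%nat -> 0 <= f k) -> 0 <= Rsum f n.
Proof.
  intro H; induction n; simpl; [lra |].
  pose proof (H n ltac:(lia)). assert (0 <= Rsum f n) by (apply IHn; auto). lra.
Qed.

Lemma Rsum_term_le (f : nat -> R) (N k : nat) :
  (forall j, (j < N)%nat -> 0 <= f j) -> (k < N)%nat -> f k <= Rsum f N.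
Proof.
  intros H Hk; induction N; [lia |]. simpl. destruct (Nat.eq_dec k N).
  - subst. pose proof (Rsum_nonneg f N ltac:(intros; apply H; lia)). lra.
  - pose proof (IHN ltac:(intros; apply H; lia) ltac:(lia)). pose proof (H N ltac:(lia)). lra.
Qed.

Lemma Rsum_scal (c : R) (f : nat -> R) (n : nat) : Rsum (fun k => c * f k) n = c * Rsum f n.
Proof. induction n; simpl; [ring | rewrite IHn; ring]. Qed.

Lemma Rsum_const (c : R) (n : nat) : Rsum (fun _ => c) n = INR n * c.
Proof. induction n; simpl Rsum; [simpl; ring | rewrite IHn, S_INR; ring]. Qed.

Lemma Cnorm_Csum (a : nat -> Cplx) (n : nat) :
  Cnorm (Csum a n) <= Rsum (fun k => Cnorm (a k)) n.
Proof.
  induction n; simpl; [rewrite Cnorm_C0; lra |].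
  eapply Rle_trans; [apply Cnorm_tri | lra].
Qed.

Lemma geo_sum_le2 (t : R) (n : nat) : 0 <= t <= 1/2 -> Rsum (fun k => t ^ k) n <= 2.
Proof.
  intro Ht. enough (Rsum (fun k => t ^ k) n <= 2 - 2 * t ^ n)
    by (assert (0 <= t ^ n) by (apply pow_le; lra); lra).
  induction n; simpl; [lra |]. assert (0 <= t ^ n) by (apply pow_le; lra). nra.
Qed.

Lemma geo_diff (R Sg : R) (n : nat) :
  (Sg - R) * Rsum (fun k => R ^ k * Sg ^ (n - 1 - k)) n = Sg ^ n - R ^ n.
Proof.
  induction n; [simpl; ring |].
  simpl Rsum. rewrite (Rsum_ext _ (fun k => Sg * (R ^ k * Sg ^ (n - 1 - k)))).
  2:{ intros k Hk. replace (n - 0 - k)%nat with (S (n - 1 - k)) by lia. simpl; ring. }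
  rewrite Rsum_scal. replace (n - 0 - n)%nat with O by lia.
  replace ((Sg - R) * (Sg * Rsum (fun k => R ^ k * Sg ^ (n - 1 - k)) n + R ^ n * Sg ^ 0))
    with (Sg * ((Sg - R) * Rsum (fun k => R ^ k * Sg ^ (n - 1 - k)) n) + (Sg - R) * R ^ n)
    by (simpl; ring).
  rewrite IHn. simpl; ring.
Qed.

Lemma pow2_ge (n : nat) : INR (S n) <= 2 ^ n.
Proof.
  induction n; [simpl; lra |]. rewrite S_INR. change (2 ^ S n) with (2 * 2 ^ n).
  assert (1 <= 2 ^ n) by (apply pow_R1_Rle; lra). lra.
Qed.

Lemma pow4_ge (n : nat) : INR (S n) * INR (S n) <= 4 ^ n.
Proof.
  replace 4 with (2 * 2) by ring. rewrite Rpow_mult_distr.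
  pose proof (pow2_ge n). pose proof (pos_INR (S n)). nra.
Qed.

Lemma half_pow_small (eps : R) : 0 < eps -> exists N, forall n, (N <= n)%nat -> (1/2) ^ n < eps.
Proof.
  intro He. destruct (pow_lt_1_zero (1/2) ltac:(rewrite Rabs_right; lra) eps He) as [N HN].
  exists N. intros n Hn. specialize (HN n Hn). rewrite Rabs_right in HN; auto.
  apply Rle_ge, pow_le; lra.
Qed.

Lemma le_eps (x y : R) : (forall eps, 0 < eps -> x < y + eps) -> x <= y.
Proof. intro H. destruct (Rle_or_lt x y); auto. specialize (H ((x - y) / 2) ltac:(lra)). lra. Qed.

Lemma geometric_eventually_small (K eps : R) : 0 <= K -> 0 < eps ->
  exists N, forall n, (N <= n)%nat -> K * (1/2) ^ n < eps.
Proof.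
  intros HK He. destruct (half_pow_small (eps / (K + 1)) ltac:(apply Rdiv_lt_0_compat; lra))
    as [N HN].
  exists N. intros n Hn. specialize (HN n Hn). assert (0 <= (1/2) ^ n) by (apply pow_le; lra).
  apply Rmult_lt_compat_l with (r := K + 1) in HN; [| lra].
  replace ((K + 1) * (eps / (K + 1))) with eps in HN by (field; lra). nra.
Qed.

Lemma Cseries_unique (a : nat -> Cplx) (s1 s2 : Cplx) :
  Cseries_to a s1 -> Cseries_to a s2 -> s1 = s2.
Proof.
  intros H1 H2. apply Csub_eq0, Cnorm_eq0, Rle_antisym; [| apply Cnorm_ge0].
  apply le_eps; intros eps He.
  destruct (H1 (eps / 2) ltac:(lra)) as [N1 HN1]. destruct (H2 (eps / 2) ltac:(lra)) as [N2 HN2].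
  specialize (HN1 (max N1 N2) ltac:(lia)). specialize (HN2 (max N1 N2) ltac:(lia)).
  rewrite Cnorm_sub_sym in HN1. pose proof (Cdist_tri s1 (Csum a (max N1 N2)) s2). lra.
Qed.

Lemma Cseries_ext (a b : nat -> Cplx) (s : Cplx) :
  (forall n, a n = b n) -> Cseries_to a s -> Cseries_to b s.
Proof. intros H Ha. replace b with a by (apply functional_extensionality; auto). auto. Qed.

Lemma Cseries_add (a b : nat -> Cplx) (s t : Cplx) : Cseries_to a s -> Cseries_to b t ->
  Cseries_to (fun n => Cadd (a n) (b n)) (Cadd s t).
Proof.
  intros Ha Hb eps He.
  destruct (Ha (eps / 2) ltac:(lra)) as [N1 HN1]. destruct (Hb (eps / 2) ltac:(lra)) as [N2 HN2].
  exists (max N1 N2). intros n Hn. rewrite Csum_add.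
  replace (Csub (Cadd (Csum a n) (Csum b n)) (Cadd s t)) with
    (Cadd (Csub (Csum a n) s) (Csub (Csum b n) t)) by ring.
  eapply Rle_lt_trans; [apply Cnorm_tri |].
  specialize (HN1 n ltac:(lia)). specialize (HN2 n ltac:(lia)). lra.
Qed.

Lemma Cseries_scale (k : Cplx) (a : nat -> Cplx) (s : Cplx) :
  Cseries_to a s -> Cseries_to (fun n => Cmul k (a n)) (Cmul k s).
Proof.
  intros Ha eps He. pose proof (Cnorm_ge0 k).
  destruct (Ha (eps / (Cnorm k + 1)) ltac:(apply Rdiv_lt_0_compat; lra)) as [N HN].
  exists N. intros n Hn. rewrite Csum_mul_l.
  replace (Csub (Cmul k (Csum a n)) (Cmul k s)) with (Cmul k (Csub (Csum a n) s)) by ring.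
  rewrite Cnorm_mul. specialize (HN n Hn).
  apply Rle_lt_trans with ((Cnorm k + 1) * Cnorm (Csub (Csum a n) s)).
  - pose proof (Cnorm_ge0 (Csub (Csum a n) s)); nra.
  - apply Rmult_lt_compat_l with (r := Cnorm k + 1) in HN; [| lra].
    replace ((Cnorm k + 1) * (eps / (Cnorm k + 1))) with eps in HN by (field; lra). lra.
Qed.

Lemma Cseries_sub (a b : nat -> Cplx) (s t : Cplx) : Cseries_to a s -> Cseries_to b t ->
  Cseries_to (fun n => Csub (a n) (b n)) (Csub s t).
Proof.
  intros Ha Hb. pose proof (Cseries_add _ _ _ _ Ha (Cseries_scale (Copp C1) b t Hb)) as H.
  replace (Csub s t) with (Cadd s (Cmul (Copp C1) t)) by ring.
  eapply Cseries_ext; [| exact H]. intros; simpl; ring.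
Qed.

Lemma Cseries_le (a : nat -> Cplx) (s : Cplx) (B : R) :
  Cseries_to a s -> (forall n, Cnorm (Csum a n) <= B) -> Cnorm s <= B.
Proof.
  intros Ha HB. apply le_eps; intros eps He.
  destruct (Ha eps He) as [N HN]. specialize (HN N (le_n N)). specialize (HB N).
  rewrite Cnorm_sub_sym in HN. pose proof (Cnorm_tri (Csum a N) (Csub s (Csum a N))) as H.
  replace (Cadd (Csum a N) (Csub s (Csum a N))) with s in H by ring. lra.
Qed.

Lemma Cseries_shift (b : nat -> Cplx) (s : Cplx) :
  Cseries_to (fun n => b (S n)) s -> b O = C0 -> Cseries_to b s.
Proof.
  intros H H0 eps He. destruct (H eps He) as [N HN]. exists (S N). intros [|n] Hn; [lia |].
  rewrite Csum_first, H0, (Radd_0_l Cplx_ring). apply HN. lia.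
Qed.

Lemma Cseries_terms_bounded (a : nat -> Cplx) (s : Cplx) :
  Cseries_to a s -> exists B, 0 <= B /\ forall n, Cnorm (a n) <= B.
Proof.
  intro H. destruct (H 1 ltac:(lra)) as [N HN].
  set (B0 := Rsum (fun k => Cnorm (a k)) N).
  assert (0 <= B0) by (apply Rsum_nonneg; intros; apply Cnorm_ge0).
  exists (2 + B0). split; [lra |]. intro n. destruct (Nat.lt_ge_cases n N).
  - pose proof (Rsum_term_le (fun k => Cnorm (a k)) N n ltac:(intros; apply Cnorm_ge0) H1).
    fold B0 in H2. lra.
  - replace (a n) with (Csub (Csub (Csum a (S n)) s) (Csub (Csum a n) s)) by (simpl; ring).
    eapply Rle_trans; [apply Cnorm_sub_tri |].
    pose proof (HN (S n) ltac:(lia)). pose proof (HN n H1). lra.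
Qed.

(** ** Series with geometrically bounded coefficients *)

Definition bnd (a : FPS) (M R : R) : Prop := forall n, Cnorm (a n) <= M * R ^ n.
Definition term (a : FPS) (z : Cplx) : nat -> Cplx := fun n => Cmul (a n) (Cpow z n).

Lemma bnd_mono (a : FPS) (M R R' : R) : bnd a M R -> 0 <= M -> 0 <= R -> R <= R' -> bnd a M R'.
Proof.
  intros Hb HM HR HRR n. eapply Rle_trans; [apply Hb |].
  apply Rmult_le_compat_l; auto. apply pow_incr; lra.
Qed.

Lemma term_bound (a : FPS) (M R : R) (z : Cplx) (n : nat) :
  bnd a M R -> Cnorm (term a z n) <= M * (Cnorm z * R) ^ n.
Proof.
  intro Hb. unfold term. rewrite Cnorm_mul, Cnorm_pow, Rpow_mult_distr.
  pose proof (Hb n). pose proof (pow_le (Cnorm z) n (Cnorm_ge0 z)).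
  apply Rle_trans with (M * R ^ n * Cnorm z ^ n); [apply Rmult_le_compat_r; auto | right; ring].
Qed.

Lemma block_bound (a : FPS) (M R : R) (z : Cplx) (n m : nat) :
  bnd a M R -> 0 <= M -> 0 <= R -> Cnorm z * R <= 1/2 -> (n <= m)%nat ->
  Cnorm (Csub (Csum (term a z) m) (Csum (term a z) n)) <= 2 * M * (Cnorm z * R) ^ n.
Proof.
  intros Hb HM HR Ht Hnm. set (t := Cnorm z * R) in *.
  assert (0 <= t) by (unfold t; pose proof (Cnorm_ge0 z); nra).
  replace m with (n + (m - n))%nat by lia. rewrite Csum_plus.
  replace (Csub (Cadd (Csum (term a z) n) (Csum (fun k => term a z (n + k)%nat) (m - n)))
             (Csum (term a z) n)) with (Csum (fun k => term a z (n + k)%nat) (m - n)) by ring.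
  eapply Rle_trans; [apply Cnorm_Csum |].
  eapply Rle_trans; [apply Rsum_le with (g := fun k => M * t ^ n * t ^ k) |].
  { intros k _. eapply Rle_trans; [apply term_bound, Hb |]. fold t. rewrite pow_add. right; ring. }
  rewrite Rsum_scal. pose proof (geo_sum_le2 t (m - n) ltac:(lra)).
  assert (0 <= M * t ^ n) by (apply Rmult_le_pos; auto; apply pow_le; auto).
  apply Rle_trans with ((M * t ^ n) * 2); [apply Rmult_le_compat_l; auto | right; ring].
Qed.

Lemma Cseries_cauchy (a : nat -> Cplx) :
  (forall eps, 0 < eps -> exists N, forall n m, (N <= n)%nat -> (n <= m)%nat ->
     Cnorm (Csub (Csum a m) (Csum a n)) < eps) ->
  exists s, Cseries_to a s.
Proof.
  intro HC.
  assert (HC' : forall eps, 0 < eps -> exists N, forall n m, (N <= n)%nat -> (N <= m)%nat ->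
            Cnorm (Csub (Csum a m) (Csum a n)) < eps).
  { intros eps He. destruct (HC eps He) as [N HN]. exists N. intros n m Hn Hm.
    destruct (Nat.le_ge_cases n m); [apply HN; auto | rewrite Cnorm_sub_sym; apply HN; auto]. }
  assert (HRe : Cauchy_crit (fun n => Re (Csum a n))).
  { intros eps He. destruct (HC' eps He) as [N HN]. exists N. intros n m Hn Hm.
    unfold Rdist. eapply Rle_lt_trans; [| apply (HN m n); auto].
    eapply Rle_trans; [| apply Re_le]. simpl. right; f_equal; ring. }
  assert (HIm : Cauchy_crit (fun n => Im (Csum a n))).
  { intros eps He. destruct (HC' eps He) as [N HN]. exists N. intros n m Hn Hm.
    unfold Rdist. eapply Rle_lt_trans; [| apply (HN m n); auto].
    eapply Rle_trans; [| apply Im_le]. simpl. right; f_equal; ring. }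
  destruct (R_complete _ HRe) as [lr Hlr]. destruct (R_complete _ HIm) as [li Hli].
  exists (mkC lr li). intros eps He.
  destruct (Hlr (eps / 2) ltac:(lra)) as [N1 HN1]. destruct (Hli (eps / 2) ltac:(lra)) as [N2 HN2].
  exists (max N1 N2). intros n Hn. eapply Rle_lt_trans; [apply Cnorm_ReIm |].
  specialize (HN1 n ltac:(lia)). specialize (HN2 n ltac:(lia)). unfold Rdist in *.
  set (S := Csum a n) in *.
  replace (Re (Csub S (mkC lr li))) with (Re S - lr) by (unfold Csub, Cadd, Copp; simpl; ring).
  replace (Im (Csub S (mkC lr li))) with (Im S - li) by (unfold Csub, Cadd, Copp; simpl; ring).
  lra.
Qed.

Lemma Cseries_exists (a : FPS) (M R : R) (z : Cplx) :
  bnd a M R -> 0 <= M -> 0 <= R -> Cnorm z * R <= 1/2 -> exists s, Cseries_to (term a z) s.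
Proof.
  intros Hb HM HR Ht. apply Cseries_cauchy. intros eps He.
  assert (0 <= Cnorm z * R) by (pose proof (Cnorm_ge0 z); nra).
  destruct (geometric_eventually_small (2 * M) eps ltac:(lra) He) as [N HN].
  exists N. intros n m Hn Hm. eapply Rle_lt_trans; [apply (block_bound a M R z n m); auto |].
  eapply Rle_lt_trans; [| apply (HN n Hn)].
  apply Rmult_le_compat_l; [lra | apply pow_incr; lra].
Qed.

Lemma tail_bound (a : FPS) (M R : R) (z s : Cplx) (N : nat) :
  bnd a M R -> 0 <= M -> 0 <= R -> Cnorm z * R <= 1/2 -> Cseries_to (term a z) s ->
  Cnorm (Csub (Csum (term a z) N) s) <= 2 * M * (Cnorm z * R) ^ N.
Proof.
  intros Hb HM HR Ht Hs. apply le_eps; intros eps He.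
  destruct (Hs eps He) as [N1 HN1]. specialize (HN1 (max N N1) ltac:(lia)).
  pose proof (block_bound a M R z N (max N N1) Hb HM HR Ht ltac:(lia)) as H.
  rewrite Cnorm_sub_sym in H.
  pose proof (Cdist_tri (Csum (term a z) N) (Csum (term a z) (max N N1)) s). lra.
Qed.

Lemma fone_series (z : Cplx) : Cseries_to (term fone z) C1.
Proof.
  intros eps He. exists 1%nat. intros [|n] Hn; [lia |].
  rewrite Csum_first, Csum_zero by (intros; unfold term, fone; ring).
  unfold term, fone. simpl.
  replace (Csub (Cadd (Cmul C1 C1) C0) C1) with C0 by ring. rewrite Cnorm_C0. lra.
Qed.

Lemma prod_bnd (a b : FPS) (Ma Mb R : R) : bnd a Ma R -> bnd b Mb R ->
  0 <= Ma -> 0 <= Mb -> 0 <= R -> bnd (fmul a b) (Ma * Mb) (2 * R).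
Proof.
  intros Ha Hb HMa HMb HR n. unfold fmul.
  eapply Rle_trans; [apply Cnorm_Csum |].
  eapply Rle_trans; [apply Rsum_le with (g := fun _ => Ma * Mb * R ^ n) |].
  { intros k Hk. rewrite Cnorm_mul.
    apply Rle_trans with ((Ma * R ^ k) * (Mb * R ^ (n - k))).
    - apply Rmult_le_compat; auto using Cnorm_ge0.
    - replace (R ^ n) with (R ^ k * R ^ (n - k)) by (rewrite <- pow_add; f_equal; lia).
      right; ring. }
  rewrite Rsum_const, Rpow_mult_distr. pose proof (pow2_ge n).
  assert (0 <= Ma * Mb * R ^ n) by (apply Rmult_le_pos; [nra | apply pow_le; auto]).
  nra.
Qed.

Lemma prod_partial (a b : FPS) (z : Cplx) (N : nat) :
  Csum (term (fmul a b) z) N = Csum (fun k => Cmul (term a z k) (Csum (term b z) (N - k))) N.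
Proof.
  induction N; [reflexivity |].
  change (Csum (term (fmul a b) z) (S N)) with
    (Cadd (Csum (term (fmul a b) z) N) (term (fmul a b) z N)).
  rewrite IHN.
  rewrite (Csum_ext (fun k => Cmul (term a z k) (Csum (term b z) (S N - k)))
     (fun k => Cadd (Cmul (term a z k) (Csum (term b z) (N - k)))
                    (Cmul (term a z k) (term b z (N - k))))).
  2:{ intros k Hk. replace (S N - k)%nat with (S (N - k)) by lia. simpl Csum at 1. ring. }
  rewrite Csum_add.
  change (Csum (fun k => Cmul (term a z k) (Csum (term b z) (N - k))) (S N)) with
    (Cadd (Csum (fun k => Cmul (term a z k) (Csum (term b z) (N - k))) N)
          (Cmul (term a z N) (Csum (term b z) (N - N)))).
  rewrite Nat.sub_diag.
  assert (term (fmul a b) z N = Csum (fun k => Cmul (term a z k) (term b z (N - k))) (S N)) as ->.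
  { unfold term at 1, fmul. rewrite <- Csum_mul_r. apply Csum_ext; intros k Hk.
    unfold term. replace (Cpow z N) with (Cmul (Cpow z k) (Cpow z (N - k)))
      by (rewrite <- Cpow_add; f_equal; lia).
    ring. }
  change (Csum (term b z) 0) with C0. ring.
Qed.

Lemma N_pow_quarter (t : R) (N : nat) : 0 <= t <= 1/4 -> INR N * t ^ N <= (1/2) ^ N.
Proof.
  intro Ht. pose proof (pow2_ge N) as H2. rewrite S_INR in H2.
  assert (HN : INR N * (1/2) ^ N <= 1).
  { replace ((1/2) ^ N) with (/ 2 ^ N) by (rewrite <- pow_inv; f_equal; lra).
    assert (0 < 2 ^ N) by (apply pow_lt; lra).
    apply Rmult_le_reg_r with (2 ^ N); auto. rewrite Rmult_assoc, Rinv_l by lra. lra. }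
  assert (t ^ N <= (1/2) ^ N * (1/2) ^ N)
    by (rewrite <- Rpow_mult_distr; apply pow_incr; lra).
  assert (0 <= (1/2) ^ N) by (apply pow_le; lra). pose proof (pos_INR N).
  apply Rle_trans with (INR N * ((1/2) ^ N * (1/2) ^ N)); [apply Rmult_le_compat_l; auto |].
  rewrite <- Rmult_assoc. apply Rle_trans with (1 * (1/2) ^ N); [apply Rmult_le_compat_r |]; lra.
Qed.

Lemma prod_error_bound (a b : FPS) (Ma Mb R : R) (z A B : Cplx) (N : nat) :
  bnd a Ma R -> bnd b Mb R -> 0 <= Ma -> 0 <= Mb -> 0 <= R -> Cnorm z * R <= 1/4 ->
  Cseries_to (term a z) A -> Cseries_to (term b z) B ->
  Cnorm (Csub (Csum (term (fmul a b) z) N) (Cmul A B)) <=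
    (2 * Ma * Mb + 2 * Ma * Cnorm B) * (1/2) ^ N.
Proof.
  intros Ha Hb HMa HMb HR Ht HA HB. set (t := Cnorm z * R) in *.
  assert (0 <= t) by (unfold t; pose proof (Cnorm_ge0 z); nra).
  rewrite prod_partial.
  replace (Csub (Csum (fun k => Cmul (term a z k) (Csum (term b z) (N - k))) N) (Cmul A B))
    with (Cadd (Csum (fun k => Cmul (term a z k) (Csub (Csum (term b z) (N - k)) B)) N)
               (Cmul (Csub (Csum (term a z) N) A) B)).
  2:{ rewrite (Csum_ext _ (fun k => Csub (Cmul (term a z k) (Csum (term b z) (N - k)))
                                         (Cmul (term a z k) B))) by (intros; ring).
      rewrite Csum_sub, Csum_mul_r. ring. }
  eapply Rle_trans; [apply Cnorm_tri |].
  assert (H1 : Cnorm (Csum (fun k => Cmul (term a z k) (Csub (Csum (term b z) (N - k)) B)) N)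
               <= 2 * Ma * Mb * (INR N * t ^ N)).
  { eapply Rle_trans; [apply Cnorm_Csum |].
    eapply Rle_trans; [apply Rsum_le with (g := fun _ => 2 * Ma * Mb * t ^ N) |].
    { intros k Hk. rewrite Cnorm_mul.
      pose proof (tail_bound b Mb R z B (N - k) Hb HMb HR ltac:(fold t; lra) HB) as T.
      pose proof (term_bound a Ma R z k Ha) as Tk. fold t in T, Tk.
      apply Rle_trans with ((Ma * t ^ k) * (2 * Mb * t ^ (N - k)));
        [apply Rmult_le_compat; auto using Cnorm_ge0 |].
      replace (t ^ N) with (t ^ k * t ^ (N - k)) by (rewrite <- pow_add; f_equal; lia).
      right; ring. }
    rewrite Rsum_const. right; ring. }
  assert (H2 : Cnorm (Cmul (Csub (Csum (term a z) N) A) B) <= 2 * Ma * t ^ N * Cnorm B).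
  { rewrite Cnorm_mul. apply Rmult_le_compat_r; [apply Cnorm_ge0 |].
    apply (tail_bound a Ma R z A N Ha HMa HR ltac:(fold t; lra) HA). }
  pose proof (N_pow_quarter t N ltac:(lra)).
  assert (t ^ N <= (1/2) ^ N) by (apply pow_incr; lra).
  pose proof (Cnorm_ge0 B). assert (0 <= t ^ N) by (apply pow_le; auto).
  assert (2 * Ma * Mb * (INR N * t ^ N) <= 2 * Ma * Mb * (1/2) ^ N)
    by (apply Rmult_le_compat_l; nra).
  assert (2 * Ma * t ^ N * Cnorm B <= 2 * Ma * Cnorm B * (1/2) ^ N).
  { replace (2 * Ma * t ^ N * Cnorm B) with ((2 * Ma * Cnorm B) * t ^ N) by ring.
    apply Rmult_le_compat_l; nra. }
  lra.
Qed.

Lemma prod_conv (a b : FPS) (Ma Mb R : R) (z A B : Cplx) :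
  bnd a Ma R -> bnd b Mb R -> 0 <= Ma -> 0 <= Mb -> 0 <= R -> Cnorm z * R <= 1/4 ->
  Cseries_to (term a z) A -> Cseries_to (term b z) B ->
  Cseries_to (term (fmul a b) z) (Cmul A B).
Proof.
  intros Ha Hb HMa HMb HR Ht HA HB eps He.
  pose proof (Cnorm_ge0 B).
  destruct (geometric_eventually_small (2 * Ma * Mb + 2 * Ma * Cnorm B) eps ltac:(nra) He)
    as [N HN].
  exists N. intros n Hn. eapply Rle_lt_trans; [eapply prod_error_bound; eauto | auto].
Qed.

Lemma mul_series (a b : FPS) (Ma Mb R : R) (z A B : Cplx) :
  bnd a Ma R -> bnd b Mb R -> 0 <= Ma -> 0 <= Mb -> 0 <= R -> Cnorm z * (2 * R) <= 1/4 ->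
  Cseries_to (term a z) A -> Cseries_to (term b z) B ->
  Cseries_to (term (fmul a b) z) (Cmul A B) /\ bnd (fmul a b) (Ma * Mb) (2 * R).
Proof.
  intros Ha Hb HMa HMb HR Ht HA HB. split; [| apply prod_bnd; auto].
  pose proof (Cnorm_ge0 z). apply (prod_conv a b Ma Mb R); auto. nra.
Qed.

Lemma finv_coef_succ (a : FPS) (n : nat) : a O = C1 ->
  finv a (S n) = Copp (Csum (fun k => Cmul (a (S k)) (finv a (S n - S k)%nat)) (S n)).
Proof.
  intro Ha. assert (E : fmul a (finv a) (S n) = C0) by (rewrite finv_spec by auto; reflexivity).
  unfold fmul in E. rewrite Csum_first, Ha, Nat.sub_0_r in E.
  set (X := Csum _ (S n)) in *.
  transitivity (Csub (Cadd (Cmul C1 (finv a (S n))) X) X); [ring | rewrite E; ring].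
Qed.

Lemma finv_bnd (a : FPS) (M R : R) : a O = C1 -> bnd a M R -> 0 <= M -> 0 <= R ->
  bnd (finv a) 1 (R + M * R).
Proof.
  intros Ha Hb HM HR. set (Sg := R + M * R).
  assert (HS : 0 <= Sg) by (unfold Sg; nra).
  assert (H : forall n m, (m <= n)%nat -> Cnorm (finv a m) <= Sg ^ m).
  { induction n; intros m Hm.
    - replace m with O by lia. rewrite finv_0, Cnorm_C1. simpl; lra.
    - destruct (Nat.le_gt_cases m n); [apply IHn; auto |]. replace m with (S n) by lia.
      rewrite finv_coef_succ, Cnorm_opp by auto.
      eapply Rle_trans; [apply Cnorm_Csum |].
      eapply Rle_trans;
        [apply Rsum_le with (g := fun k => M * R * (R ^ k * Sg ^ (S n - 1 - k))) |].
      { intros k Hk. rewrite Cnorm_mul.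
        apply Rle_trans with ((M * R ^ (S k)) * Sg ^ (S n - 1 - k)); [| simpl; right; ring].
        apply Rmult_le_compat; auto using Cnorm_ge0.
        replace (S n - 1 - k)%nat with (S n - S k)%nat by lia. apply IHn; lia. }
      rewrite Rsum_scal. replace (M * R) with (Sg - R) by (unfold Sg; ring).
      rewrite geo_diff. assert (0 <= R ^ S n) by (apply pow_le; auto). lra. }
  intro n. rewrite Rmult_1_l. apply (H n n). lia.
Qed.

Lemma inv_series (a : FPS) (M R : R) (z A : Cplx) : a O = C1 -> bnd a M R -> 0 <= M -> 0 <= R ->
  Cnorm z * (R + M * R) <= 1/4 -> Cseries_to (term a z) A ->
  exists B, Cseries_to (term (finv a) z) B /\ Cmul A B = C1.
Proof.
  intros Ha Hb HM HR Hz HA.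
  assert (HS : 0 <= R + M * R) by nra.
  pose proof (finv_bnd a M R Ha Hb HM HR) as Hb'.
  destruct (Cseries_exists (finv a) 1 (R + M * R) z Hb' ltac:(lra) HS ltac:(lra)) as [B HB].
  exists B. split; auto.
  assert (Hb2 : bnd a M (R + M * R)) by (apply bnd_mono with R; auto; nra).
  pose proof (prod_conv a (finv a) M 1 (R + M * R) z A B Hb2 Hb' HM ltac:(lra) HS Hz HA HB) as H.
  rewrite finv_spec in H by auto. eapply Cseries_unique; [exact H | apply fone_series].
Qed.

(** ** Term-wise differentiation of the series of f *)

Lemma deriv_unique (f : Cplx -> Cplx) (z l1 l2 : Cplx) :
  Cderiv_at f z l1 -> Cderiv_at f z l2 -> l1 = l2.
Proof.
  intros H1 H2. apply Csub_eq0, Cnorm_eq0, Rle_antisym; [| apply Cnorm_ge0].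
  apply le_eps; intros eps He.
  destruct (H1 (eps / 2) ltac:(lra)) as [d1 [Hd1 K1]].
  destruct (H2 (eps / 2) ltac:(lra)) as [d2 [Hd2 K2]].
  set (h := RtoC (Rmin d1 d2 / 2)).
  assert (Hh : 0 < Cnorm h /\ Cnorm h < d1 /\ Cnorm h < d2).
  { unfold h. rewrite Cnorm_RtoC. pose proof (Rmin_l d1 d2). pose proof (Rmin_r d1 d2).
    assert (0 < Rmin d1 d2) by (apply Rmin_pos; auto). rewrite Rabs_right by lra. lra. }
  specialize (K1 h ltac:(lra)). specialize (K2 h ltac:(lra)). rewrite Cnorm_sub_sym in K1.
  pose proof (Cdist_tri l1 (Cdiv (Csub (f (Cadd z h)) (f z)) h) l2). lra.
Qed.

Definition pow_diff (xi h : Cplx) (m : nat) : Cplx := Csub (Cpow (Cadd xi h) m) (Cpow xi m).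
Definition pow_rem (xi h : Cplx) (n : nat) : Cplx :=
  Csub (pow_diff xi h (S n)) (Cmul (RtoC (INR (S n))) (Cmul h (Cpow xi n))).

Lemma pow_diff_bound (xi h : Cplx) (m : nat) : let s := Cnorm xi + Cnorm h in
  s * Cnorm (pow_diff xi h m) <= INR m * Cnorm h * s ^ m.
Proof.
  intro s. pose proof (Cnorm_ge0 xi) as Hx. pose proof (Cnorm_ge0 h) as Hy.
  assert (Hs : 0 <= s) by (unfold s; lra).
  induction m.
  - unfold pow_diff. simpl. replace (Csub C1 C1) with C0 by ring. rewrite Cnorm_C0. lra.
  - assert (E : pow_diff xi h (S m) =
                Cadd (Cmul (Cadd xi h) (pow_diff xi h m)) (Cmul h (Cpow xi m)))
      by (unfold pow_diff; simpl; ring).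
    rewrite E.
    assert (Hxh : Cnorm (Cadd xi h) <= s) by apply Cnorm_tri.
    assert (Hp : Cnorm xi ^ m <= s ^ m) by (apply pow_incr; unfold s; lra).
    pose proof (Cnorm_ge0 (pow_diff xi h m)). pose proof (Cnorm_ge0 (Cadd xi h)).
    assert (0 <= s ^ m) by (apply pow_le; auto).
    assert (0 <= Cnorm xi ^ m) by (apply pow_le; auto).
    apply Rle_trans with
      (s * (Cnorm (Cadd xi h) * Cnorm (pow_diff xi h m) + Cnorm h * Cnorm xi ^ m)).
    { apply Rmult_le_compat_l; auto.
      eapply Rle_trans; [apply Cnorm_tri |]. rewrite !Cnorm_mul, Cnorm_pow. lra. }
    assert (A1 : s * (Cnorm (Cadd xi h) * Cnorm (pow_diff xi h m)) <= s * (INR m * Cnorm h * s ^ m)).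
    { replace (s * (Cnorm (Cadd xi h) * Cnorm (pow_diff xi h m))) with
         (Cnorm (Cadd xi h) * (s * Cnorm (pow_diff xi h m))) by ring.
      apply Rle_trans with (s * (s * Cnorm (pow_diff xi h m)));
        [apply Rmult_le_compat_r; nra | apply Rmult_le_compat_l; auto]. }
    assert (A2 : s * (Cnorm h * Cnorm xi ^ m) <= s * (Cnorm h * s ^ m))
      by (apply Rmult_le_compat_l; auto; apply Rmult_le_compat_l; auto).
    rewrite S_INR. simpl pow. nra.
Qed.

Lemma pow_rem_bound (xi h : Cplx) (n : nat) : let s := Cnorm xi + Cnorm h in
  s * Cnorm (pow_rem xi h n) <= INR (S n) * INR (S n) * (Cnorm h * Cnorm h) * s ^ n.
Proof.
  intro s. pose proof (Cnorm_ge0 xi) as Hx. pose proof (Cnorm_ge0 h) as Hy.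
  assert (Hs : 0 <= s) by (unfold s; lra).
  induction n.
  - unfold pow_rem, pow_diff. simpl.
    replace (Csub (Csub (Cmul (Cadd xi h) C1) (Cmul xi C1)) (Cmul (RtoC 1) (Cmul h C1)))
      with C0 by (apply Cplx_eq; simpl; ring).
    rewrite Cnorm_C0. simpl. nra.
  - assert (E : pow_rem xi h (S n) =
                Cadd (Cmul xi (pow_rem xi h n)) (Cmul h (pow_diff xi h (S n)))).
    { unfold pow_rem, pow_diff. rewrite (S_INR (S n)), RtoC_add. simpl Cpow.
      change (RtoC 1) with C1. ring. }
    rewrite E.
    pose proof (pow_diff_bound xi h (S n)) as HD. fold s in HD.
    pose proof (Cnorm_ge0 (pow_rem xi h n)). pose proof (Cnorm_ge0 (pow_diff xi h (S n))).
    assert (0 <= s ^ n) by (apply pow_le; auto).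
    assert (HH1 : s * Cnorm (Cadd (Cmul xi (pow_rem xi h n)) (Cmul h (pow_diff xi h (S n))))
                 <= Cnorm xi * (s * Cnorm (pow_rem xi h n))
                    + Cnorm h * (s * Cnorm (pow_diff xi h (S n)))).
    { apply Rle_trans with
        (s * (Cnorm xi * Cnorm (pow_rem xi h n) + Cnorm h * Cnorm (pow_diff xi h (S n))));
        [| right; ring].
      apply Rmult_le_compat_l; auto. eapply Rle_trans; [apply Cnorm_tri |].
      rewrite !Cnorm_mul. lra. }
    assert (A1 : Cnorm xi * (s * Cnorm (pow_rem xi h n))
                 <= s * (INR (S n) * INR (S n) * (Cnorm h * Cnorm h) * s ^ n)).
    { apply Rle_trans with (s * (s * Cnorm (pow_rem xi h n)));
        [apply Rmult_le_compat_r; [nra | unfold s; lra] | apply Rmult_le_compat_l; auto]. }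
    assert (A2 : Cnorm h * (s * Cnorm (pow_diff xi h (S n)))
                 <= Cnorm h * (INR (S n) * Cnorm h * s ^ S n))
      by (apply Rmult_le_compat_l; auto).
    pose proof (pos_INR (S n)).
    rewrite (S_INR (S n)). simpl pow in *.
    assert (0 <= Cnorm h * Cnorm h * s ^ n * s) by (repeat apply Rmult_le_pos; auto).
    nra.
Qed.

Section TermwiseDerivative.
Variable c : nat -> Cplx.
Variable f : Cplx -> Cplx.
Hypothesis Hf : forall z, Cnorm z < 1 ->
  Cseries_to (fun n => Cmul (gser c n) (Cpow z (S n))) (f z).
Variable M : R.
Hypothesis HM : 0 <= M.
Hypothesis Hg : bnd (gser c) M 2.

Definition dq_term (xi h : Cplx) (n : nat) : Cplx :=
  Csub (Cmul (Cinv h) (Csub (Cmul (gser c n) (Cpow (Cadd xi h) (S n)))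
                            (Cmul (gser c n) (Cpow xi (S n)))))
       (term (fpser c) xi n).

Lemma dq_term_eq (xi h : Cplx) (n : nat) : h <> C0 ->
  dq_term xi h n = Cmul (gser c n) (Cmul (Cinv h) (pow_rem xi h n)).
Proof. intro Hh. unfold dq_term, term, fpser, fderiv, fser, pow_rem, pow_diff. field. auto. Qed.

Lemma dq_term_bound (xi h : Cplx) (n : nat) :
  h <> C0 -> Cnorm xi + Cnorm h <= 1/16 ->
  (Cnorm xi + Cnorm h) * Cnorm (dq_term xi h n) <= M * Cnorm h * (1/2) ^ n.
Proof.
  intros Hh Hs2. rewrite dq_term_eq, !Cnorm_mul, Cnorm_inv by auto.
  pose proof (pow_rem_bound xi h n) as HD. cbv zeta in HD.
  set (y := Cnorm h) in *. set (s := Cnorm xi + y) in *.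
  pose proof (Cnorm_pos h Hh). pose proof (Cnorm_ge0 xi). fold y in H.
  assert (Hs0 : 0 <= s) by (unfold s; lra).
  pose proof (Hg n). pose proof (Cnorm_ge0 (gser c n)). pose proof (Cnorm_ge0 (pow_rem xi h n)).
  replace (s * (Cnorm (gser c n) * (/ y * Cnorm (pow_rem xi h n))))
    with (Cnorm (gser c n) * / y * (s * Cnorm (pow_rem xi h n))) by ring.
  assert (0 <= / y) by (apply Rlt_le, Rinv_0_lt_compat; auto).
  apply Rle_trans with ((M * 2 ^ n) * / y * (INR (S n) * INR (S n) * (y * y) * s ^ n)).
  { apply Rmult_le_compat; [apply Rmult_le_pos; auto | apply Rmult_le_pos; auto
                           | apply Rmult_le_compat_r; auto | exact HD]. }
  replace (M * 2 ^ n * / y * (INR (S n) * INR (S n) * (y * y) * s ^ n))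
    with (M * y * (INR (S n) * INR (S n) * (2 * s) ^ n)) by (rewrite Rpow_mult_distr; field; lra).
  apply Rmult_le_compat_l; [apply Rmult_le_pos; lra |].
  pose proof (pow4_ge n). assert ((2 * s) ^ n <= (1/8) ^ n) by (apply pow_incr; lra).
  assert (0 <= (2 * s) ^ n) by (apply pow_le; lra).
  apply Rle_trans with (4 ^ n * (1/8) ^ n).
  - apply Rmult_le_compat; auto. pose proof (pos_INR (S n)); nra.
  - rewrite <- Rpow_mult_distr. right; f_equal; lra.
Qed.

Lemma dq_partial_bound (xi h : Cplx) (N : nat) :
  h <> C0 -> 0 < Cnorm xi + Cnorm h <= 1/16 ->
  Cnorm (Csum (dq_term xi h) N) <= 2 * M * Cnorm h / (Cnorm xi + Cnorm h).
Proof.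
  intros Hh [Hs0 Hs]. set (s := Cnorm xi + Cnorm h) in *. pose proof (Cnorm_ge0 h).
  eapply Rle_trans; [apply Cnorm_Csum |].
  apply Rle_trans with (Rsum (fun n => M * Cnorm h / s * (1/2) ^ n) N).
  { apply Rsum_le. intros k _. pose proof (dq_term_bound xi h k Hh Hs) as Hk. fold s in Hk.
    apply Rmult_le_reg_l with s; auto.
    replace (s * (M * Cnorm h / s * (1/2) ^ k)) with (M * Cnorm h * (1/2) ^ k) by (field; lra).
    exact Hk. }
  rewrite Rsum_scal. pose proof (geo_sum_le2 (1/2) N ltac:(lra)).
  assert (0 <= M * Cnorm h / s) by (unfold Rdiv; apply Rmult_le_pos; [nra |];
                                     apply Rlt_le, Rinv_0_lt_compat; lra).
  apply Rle_trans with (M * Cnorm h / s * 2); [apply Rmult_le_compat_l; auto | right; field; lra].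
Qed.

Lemma deriv_series (xi P : Cplx) : 0 < Cnorm xi -> Cnorm xi <= 1/32 ->
  Cseries_to (term (fpser c) xi) P -> Cderiv_at f xi P.
Proof.
  intros Hx0 Hx1 HP eps He. set (rho := Cnorm xi) in *.
  set (d := eps * rho / (2 * M + 1)).
  assert (Hd0 : 0 < d) by (apply Rdiv_lt_0_compat; nra).
  exists (Rmin rho d). split; [apply Rmin_pos; lra |].
  intros h [Hh0 Hhd]. pose proof (Rmin_l rho d). pose proof (Rmin_r rho d).
  assert (Hh : h <> C0) by (intro E; rewrite E, Cnorm_C0 in Hh0; lra).
  set (y := Cnorm h) in *.
  assert (Hz : Cnorm (Cadd xi h) < 1) by (pose proof (Cnorm_tri xi h) as T; fold rho y in T; lra).
  assert (Hseries : Cseries_to (dq_term xi h)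
                      (Csub (Cmul (Cinv h) (Csub (f (Cadd xi h)) (f xi))) P)).
  { apply Cseries_sub; [| exact HP]. apply Cseries_scale, Cseries_sub; apply Hf; auto.
    fold rho; lra. }
  pose proof (Cseries_le _ _ _ Hseries
                (fun N => dq_partial_bound xi h N Hh ltac:(fold rho y; lra))) as Hle.
  fold rho y in Hle.
  replace (Csub (Cdiv (Csub (f (Cadd xi h)) (f xi)) h) P)
    with (Csub (Cmul (Cinv h) (Csub (f (Cadd xi h)) (f xi))) P) by (unfold Cdiv; ring).
  eapply Rle_lt_trans; [exact Hle |].
  apply Rle_lt_trans with (2 * M * y / rho).
  { unfold Rdiv. apply Rmult_le_compat_l; [nra |]. apply Rinv_le_contravar; lra. }
  apply Rmult_lt_reg_r with rho; [lra |]. unfold Rdiv. rewrite Rmult_assoc, Rinv_l by lra.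
  assert (y * (2 * M + 1) < eps * rho).
  { apply Rmult_lt_reg_r with (/ (2 * M + 1)); [apply Rinv_0_lt_compat; lra |].
    rewrite Rmult_assoc, Rinv_r by lra. unfold d, Rdiv in *. lra. }
  nra.
Qed.

End TermwiseDerivative.

(** ** Statement (3): summing the generating function of Lambda_p *)

Section Summation.
Variable c : nat -> Cplx.
Local Notation g := (gser c).
Local Notation fp := (fpser c).

(* Convergence of f at z = 1/2 forces |c_n| = O(2^n). *)
Lemma gser_bnd (f : Cplx -> Cplx) :
  (forall z, Cnorm z < 1 -> Cseries_to (fun n => Cmul (g n) (Cpow z (S n))) (f z)) ->
  exists M, 1 <= M /\ bnd g M 2.
Proof.
  intro Hf. set (z0 := RtoC (1/2)).
  assert (Hz0 : Cnorm z0 = 1/2) by (unfold z0; rewrite Cnorm_RtoC, Rabs_right; lra).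
  destruct (Cseries_terms_bounded _ _ (Hf z0 ltac:(lra))) as [B [HB0 HB]].
  exists (2 * B + 1). split; [lra |]. intro n. specialize (HB n).
  rewrite Cnorm_mul, Cnorm_pow, Hz0 in HB.
  assert (E : (1/2) ^ S n * 2 ^ S n = 1)
    by (rewrite <- Rpow_mult_distr; replace (1/2 * 2) with 1 by lra; apply pow1).
  assert (0 < 2 ^ S n) by (apply pow_lt; lra).
  pose proof (Cnorm_ge0 (g n)).
  assert (Cnorm (g n) <= B * 2 ^ S n).
  { replace (Cnorm (g n)) with (Cnorm (g n) * (1/2) ^ S n * 2 ^ S n)
      by (rewrite Rmult_assoc, E; ring).
    apply Rmult_le_compat_r; lra. }
  simpl pow in H1. assert (0 < 2 ^ n) by (apply pow_lt; lra). nra.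
Qed.

Lemma fpser_bnd (M : R) : 0 <= M -> bnd g M 2 -> bnd fp M 4.
Proof.
  intros HM Hg n. unfold fpser, fderiv, fser.
  rewrite Cnorm_mul, Cnorm_RtoC, Rabs_right by (apply Rle_ge, pos_INR).
  pose proof (pow2_ge n). pose proof (Hg n). pose proof (Cnorm_ge0 (g n)).
  replace 4 with (2 * 2) by ring. rewrite Rpow_mult_distr.
  assert (0 <= 2 ^ n) by (apply pow_le; lra).
  apply Rle_trans with (2 ^ n * (M * 2 ^ n)); [apply Rmult_le_compat; auto; apply pos_INR |].
  right; ring.
Qed.

Lemma one_minus_wf_bnd (w : Cplx) (M : R) : 0 <= M -> bnd g M 2 ->
  bnd (fsub fone (fscale w (fser c))) (1 + Cnorm w * M) 2.
Proof.
  intros HM Hg [|n]; unfold fsub, fscale, fser, fone; pose proof (Cnorm_ge0 w).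
  - replace (Csub C1 (Cmul w C0)) with C1 by ring. rewrite Cnorm_C1. simpl. nra.
  - replace (Csub C0 (Cmul w (g n))) with (Copp (Cmul w (g n))) by ring.
    rewrite Cnorm_opp, Cnorm_mul. pose proof (Hg n).
    assert (0 <= 2 ^ n) by (apply pow_le; lra).
    assert (Cnorm w * Cnorm (g n) <= Cnorm w * (M * 2 ^ n)) by (apply Rmult_le_compat_l; auto).
    assert (0 <= Cnorm w * M * 2 ^ n) by (repeat apply Rmult_le_pos; lra).
    simpl pow. nra.
Qed.

(* a radius, depending on M and |w|, beyond all radii met in summing A K_w *)
Definition sum_radius (M W : R) : R := 4 * ((1 + M) * (1 + M)) * (1 + W).

Lemma AK_sum (w : Cplx) (M : R) (xi G F P : Cplx) :
  1 <= M -> bnd g M 2 -> Cnorm xi * (32 * sum_radius M (Cnorm w)) <= 1 ->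
  Cseries_to (term g xi) G -> Cseries_to (term (fser c) xi) F -> Cseries_to (term fp xi) P ->
  exists V K, Cmul (Cmul G G) V = C1 /\ Cmul (Csub C1 (Cmul w F)) K = C1 /\
    Cseries_to (term (fmul (Aser c) (Kser c w)) xi) (Cmul (Cmul (Cmul P P) V) K).
Proof.
  intros HM Hg Hxi HG HF HP.
  set (W := Cnorm w) in *. set (R0 := sum_radius M W) in *.
  assert (HW : 0 <= W) by apply Cnorm_ge0. pose proof (Cnorm_ge0 xi) as Hx.
  assert (HR0 : 4 <= R0 /\ 4 + M * M * 4 <= R0 /\ 2 + (1 + W * M) * 2 <= R0)
    by (unfold R0, sum_radius; repeat split; nra).
  assert (Hx0 : Cnorm xi * R0 <= 1/32) by nra.
  assert (Hgg : bnd (fmul g g) (M * M) (2 * 2)) by (apply prod_bnd; auto; lra).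
  pose proof (prod_conv _ _ M M 2 xi G G Hg Hg ltac:(lra) ltac:(lra) ltac:(lra) ltac:(nra) HG HG)
    as HGG.
  destruct (inv_series (fmul g g) (M * M) (2 * 2) xi (Cmul G G) ltac:(rewrite fmul_0; simpl; ring)
              Hgg ltac:(nra) ltac:(lra) ltac:(nra) HGG) as [V [HV EV]].
  set (a2 := fsub fone (fscale w (fser c))).
  assert (Ha2 : bnd a2 (1 + W * M) 2) by (apply one_minus_wf_bnd; [lra | exact Hg]).
  assert (HA2 : Cseries_to (term a2 xi) (Csub C1 (Cmul w F))).
  { eapply Cseries_ext; [| apply (Cseries_sub _ _ _ _ (fone_series xi) (Cseries_scale w _ _ HF))].
    intro n. unfold term, a2, fsub, fscale. ring. }
  destruct (inv_series a2 (1 + W * M) 2 xi _ ltac:(unfold a2, fsub, fscale; simpl; ring)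
              Ha2 ltac:(nra) ltac:(lra) ltac:(nra) HA2) as [K [HK EK]].
  exists V, K. split; [exact EV | split; [exact EK |]].
  (* the three successive Cauchy products, at radii R0, 2 R0, 4 R0 *)
  assert (HfpR : bnd fp M R0) by (apply bnd_mono with 4; [apply fpser_bnd; [lra | exact Hg] | lra | lra | lra]).
  destruct (mul_series fp fp M M R0 xi P P HfpR HfpR ltac:(lra) ltac:(lra) ltac:(lra)
              ltac:(nra) HP HP) as [H1 Hb1].
  assert (HbV : bnd (finv (fmul g g)) 1 (2 * R0)).
  { apply bnd_mono with (2 * 2 + M * M * (2 * 2)); [| lra | nra | lra].
    apply finv_bnd; [rewrite fmul_0; simpl; ring | exact Hgg | nra | lra]. }
  destruct (mul_series _ _ (M * M) 1 (2 * R0) xi _ _ Hb1 HbV ltac:(nra) ltac:(lra) ltac:(lra)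
              ltac:(nra) H1 HV) as [H2 Hb2].
  assert (HbK : bnd (finv a2) 1 (2 * (2 * R0))).
  { apply bnd_mono with (2 + (1 + W * M) * 2); [| lra | nra | lra].
    apply finv_bnd; [unfold a2, fsub, fscale; simpl; ring | exact Ha2 | nra | lra]. }
  destruct (mul_series _ _ (M * M * 1) 1 (2 * (2 * R0)) xi _ _ Hb2 HbK ltac:(nra) ltac:(lra)
              ltac:(lra) ltac:(nra) H2 HK) as [H3 _].
  exact H3.
Qed.

Lemma closed_form (u xi G P V K : Cplx) : u <> C0 -> xi <> C0 ->
  Cmul (Cmul G G) V = C1 -> Cmul (Csub C1 (Cmul (Cinv u) (Cmul xi G))) K = C1 ->
  Cmul (Copp u) (Cmul (Cmul (Cmul P P) V) K) =
  Cmul (Cdiv (Cmul (Cpow xi 2) (Cpow P 2)) (Cpow (Cmul xi G) 2))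
       (Cdiv (Cmul u u) (Csub (Cmul xi G) u)).
Proof.
  intros Hu Hxi EV EK.
  destruct (Cmul_eq1_inv _ _ EV) as [HGG ->]. destruct (Cmul_eq1_inv _ _ EK) as [HD ->].
  assert (HG : G <> C0) by (intro E; apply HGG; rewrite E; ring).
  assert (Hfu : Csub u (Cmul xi G) <> C0).
  { intro E. apply HD. apply Csub_eq0 in E. rewrite <- E. field. auto. }
  assert (Hfu' : Csub (Cmul xi G) u <> C0)
    by (intro E; apply Hfu; transitivity (Copp (Csub (Cmul xi G) u)); [ring | rewrite E; ring]).
  simpl Cpow. field. repeat split; auto.
Qed.

End Summation.

Lemma Lambda_generating_function (c : nat -> Cplx) (f fp : Cplx -> Cplx)
  (Hf : forall z, Cnorm z < 1 ->
          Cseries_to (fun n => Cmul (gser c n) (Cpow z (S n))) (f z))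
  (Hfp : forall z, Cnorm z < 1 -> Cderiv_at f z (fp z))
  (al : nat -> nat -> Cplx) (Hal : forall p, lam_spec c p (al p)) (u : Cplx) :
  u <> C0 -> exists r, 0 < r /\
     forall xi, 0 < Cnorm xi < r ->
       Cseries_to (fun p => Cmul (Lambda p (al p) u) (Cpow xi p))
         (Cmul (Cdiv (Cmul (Cpow xi 2) (Cpow (fp xi) 2)) (Cpow (f xi) 2))
               (Cdiv (Cmul u u) (Csub (f xi) u))).
Proof.
  intro Hu. destruct (gser_bnd c f Hf) as [M [HM Hg]].
  set (R0 := sum_radius M (Cnorm (Cinv u))).
  assert (HR0 : 4 <= R0)
    by (pose proof (Cnorm_ge0 (Cinv u)); unfold R0, sum_radius; nra).
  exists (1 / (32 * R0)). split; [apply Rdiv_lt_0_compat; lra |].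
  intros xi [Hx0 Hxr].
  assert (Hsmall : Cnorm xi * (32 * R0) <= 1).
  { apply Rmult_lt_compat_r with (r := 32 * R0) in Hxr; [| lra].
    replace (1 / (32 * R0) * (32 * R0)) with 1 in Hxr by (field; lra). lra. }
  assert (Hxi : xi <> C0) by (intro E; rewrite E, Cnorm_C0 in Hx0; lra).
  destruct (Cseries_exists (gser c) M 2 xi Hg ltac:(lra) ltac:(lra) ltac:(nra)) as [G HG].
  assert (HF : Cseries_to (term (fser c) xi) (f xi))
    by (apply Cseries_shift; [apply (Hf xi ltac:(nra)) | unfold term; simpl; ring]).
  assert (Hfx : f xi = Cmul xi G).
  { apply (Cseries_unique (fun n => Cmul (gser c n) (Cpow xi (S n)))); [apply Hf; nra |].
    eapply Cseries_ext; [| apply (Cseries_scale xi _ _ HG)].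
    intro n. unfold term. simpl Cpow. ring. }
  destruct (Cseries_exists (fpser c) M 4 xi (fpser_bnd c M ltac:(lra) Hg) ltac:(lra) ltac:(lra)
              ltac:(nra)) as [P HP].
  assert (Hfpx : fp xi = P)
    by (apply (deriv_unique f xi); [apply Hfp; nra |
        apply (deriv_series c f Hf M ltac:(lra) Hg xi P Hx0 ltac:(nra) HP)]).
  (* sum the formal identity Lambda_p(u) = -u [z^p] A K_{1/u} *)
  destruct (AK_sum c (Cinv u) M xi G (f xi) P HM Hg Hsmall HG HF HP) as [V [K [EV [EK HAK]]]].
  rewrite Hfx in EK. rewrite Hfpx, Hfx, <- (closed_form u xi G P V K Hu Hxi EV EK).
  eapply Cseries_ext; [| apply (Cseries_scale (Copp u) _ _ HAK)].
  intro p. rewrite (Lambda_AK c p (al p) u (Hal p) Hu). unfold term. ring.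
Qed.

Theorem theorem2p1 (c : nat -> Cplx) (f fp : Cplx -> Cplx)
  (Hf : forall z, Cnorm z < 1 ->
          Cseries_to (fun n => Cmul (gser c n) (Cpow z (S n))) (f z))
  (Hfp : forall z, Cnorm z < 1 -> Cderiv_at f z (fp z))
  (Huniv : forall z1 z2, Cnorm z1 < 1 -> Cnorm z2 < 1 -> f z1 = f z2 -> z1 = z2)
  (al : nat -> nat -> Cplx) (Hal : forall p, lam_spec c p (al p)) :
  (forall (p : nat) (w : Cplx), (1 <= p)%nat ->
     Tpoly c (p - 1) w =
     Csum (fun k => Cmul (RtoC (INR (S k)))
                         (Cmul (gser c k) (Fpoly c (p - 1 - k) w))) p) /\
  (forall (p : nat) (u : Cplx), (1 <= p)%nat -> u <> C0 ->
     Cadd (Lambda p (al p) u) (Cmul (acoef c p) u) = Copp (Tpoly c (p - 1) (Cinv u))) /\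
  (forall u : Cplx, u <> C0 -> exists r, 0 < r /\
     forall xi, 0 < Cnorm xi < r ->
       Cseries_to (fun p => Cmul (Lambda p (al p) u) (Cpow xi p))
         (Cmul (Cdiv (Cmul (Cpow xi 2) (Cpow (fp xi) 2)) (Cpow (f xi) 2))
               (Cdiv (Cmul u u) (Csub (f xi) u)))).
Proof.
  split; [| split].
  - intros p w Hp. apply Tpoly_convolution, Hp.
  - intros p u Hp Hu. apply Lambda_plus_acoef; auto.
  - apply (Lambda_generating_function c f fp Hf Hfp al Hal).
Qed.
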